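(* $\mathsf{wFindHS}_{\boldsymbol{\Pi}^0_1} \le_{\mathrm{W}} \mathsf{C}_{\mathbb{N}^\mathbb{N}} \equiv_{\mathrm{W}} \mathsf{C}_{2^\mathbb{N}} * \mathsf{wFindHS}_{\boldsymbol{\Pi}^0_1}$.
   Context: Weihrauch reducibility: $f\le_{\mathrm{W}} g$ iff there are computable $\Phi,\Psi:\subseteq\mathbb{N}^\mathbb{N}\to\mathbb{N}^\mathbb{N}$ such that for every realizer $G$ of $g$, $p\mapsto\Psi(\langle p,G\Phi(p)\rangle)$ realizes $f$. The compositional product $f*g$ is the $\le_{\mathrm{W}}$-maximum of $\{f_0\circ g_0 : f_0\le_{\mathrm{W}} f,\ g_0\le_{\mathrm{W}} g\}$ (a Weihrauch degree). The Ramsey space $[\mathbb{N}]^\mathbb{N}$ is the set of strictly increasing functions $\mathbb{N}\to\mathbb{N}$ with Baire-space topology; $fg=f\circ g$. For $P\subseteq[\mathbb{N}]^\mathbb{N}$, $f$ is homogeneous for $P$ if either $fg\in P$ for all $g\in[\mathbb{N}]^\mathbb{N}$ or $fg\notin P$ for all $g$; $\mathrm{HS}(P)$ is the set of homogeneous solutions. Open sets of $[\mathbb{N}]^\mathbb{N}$ are named by enumerations of sets of finite strictly increasing strings whose cones have union $P$. $\mathsf{wFindHS}_{\boldsymbol{\Pi}^0_1}$: input an open $P$ with $\mathrm{HS}(P)\cap P=\emptyset$, output any element of $\mathrm{HS}(P)\setminus P$. $\mathsf{C}_X$ for $X=\mathbb{N}^\mathbb{N}$ or $2^\mathbb{N}$: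 input a name (e.g. a tree with that set of paths) of a nonempty closed subset of $X$, output an element of it. *)

From Stdlib Require Import List Arith.
Import ListNotations.

Definition baire := nat -> nat.

Inductive rec : Type :=
| RZero : rec
| RSucc : rec
| RProj : nat -> rec
| RComp : rec -> list rec -> rec
| RPrim : rec -> rec -> rec
| RMu : rec -> rec.

Inductive reval : rec -> list nat -> nat -> Prop :=
| ev_zero v : reval RZero v 0
| ev_succ x v : reval RSucc (x :: v) (S x)
| ev_proj i v : i < length v -> reval (RProj i) v (nth i v 0)
| ev_comp f gs v ws y : revals gs v ws -> reval f ws y -> reval (RComp f gs) v y
| ev_prim0 f g v y : reval f v y -> reval (RPrim f g) (0 :: v) y
| ev_primS f g n v z y :
    reval (RPrim f g) (n :: v) z -> reval g (n :: z :: v) y ->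
    reval (RPrim f g) (S n :: v) y
| ev_mu f v n :
    reval f (n :: v) 0 ->
    (forall m, m < n -> exists k, reval f (m :: v) (S k)) ->
    reval (RMu f) v n
with revals : list rec -> list nat -> list nat -> Prop :=
| evs_nil v : revals [] v []
| evs_cons g gs v y ys : reval g v y -> revals gs v ys -> revals (g :: gs) v (y :: ys).

Definition computable (h : nat -> nat) : Prop :=
  exists e : rec, forall x, reval e [x] (h x).

Definition cpair (x y : nat) : nat := (x + y) * (x + y + 1) / 2 + y.

Fixpoint code (l : list nat) : nat :=
  match l with
  | [] => 0
  | x :: l' => S (cpair x (code l'))
  end.

Definition prefix (p : baire) (m : nat) : list nat := map p (seq 0 m).

(* ---------- computable partial functionals on Baire space ----------
   assoc h p q : the partial functional with (computable) associate h maps p to q: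
   the n-th output is read off the first m with h <n, code(p|m)> nonzero. *)
Definition assoc (h : nat -> nat) (p q : baire) : Prop :=
  forall n, exists m, h (cpair n (code (prefix p m))) = S (q n) /\
    forall m', m' < m -> h (cpair n (code (prefix p m'))) = 0.

Definition bpair (p q : baire) : baire :=
  fun n => if Nat.even n then p (Nat.div2 n) else q (Nat.div2 n).

Record problem : Type := Problem {
  pdom : baire -> Prop;
  prel : baire -> baire -> Prop }.

(* realizers are arbitrary (not necessarily computable) partial functions *)
Definition realizer (G : baire -> option baire) (g : problem) : Prop :=
  forall p, pdom g p -> exists q, G p = Some q /\ prel g p q.

Definition weihrauch_le (f g : problem) : Prop :=
  exists hPhi hPsi, computable hPhi /\ computable hPsi /\
    forall G, realizer G g ->
      forall p, pdom f p ->
        exists q, assoc hPhi p q /\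
          exists r, G q = Some r /\
            exists s, assoc hPsi (bpair p r) s /\ prel f p s.

Definition weihrauch_equiv (f g : problem) : Prop :=
  weihrauch_le f g /\ weihrauch_le g f.

Definition pcomp (f g : problem) : problem :=
  Problem (fun p => pdom g p /\ forall q, prel g p q -> pdom f q)
          (fun p r => exists q, prel g p q /\ prel f q r).

(* h is Weihrauch equivalent to the compositional product f * g, i.e. to the
   <=W-maximum of { f0 o g0 : f0 <=W f, g0 <=W g } (which is an element of that set). *)
Definition equiv_cprod (h f g : problem) : Prop :=
  (exists f0 g0, weihrauch_le f0 f /\ weihrauch_le g0 g /\
                 weihrauch_equiv h (pcomp f0 g0)) /\
  (forall f1 g1, weihrauch_le f1 f -> weihrauch_le g1 g ->
                 weihrauch_le (pcomp f1 g1) h).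

Definition in_tree (p : baire) (s : list nat) : Prop := p (code s) = 0.

Definition is_tree (T : list nat -> Prop) : Prop :=
  forall s t, T (s ++ t) -> T s.

Definition is_path (T : list nat -> Prop) (q : baire) : Prop :=
  forall m, T (prefix q m).

Definition C_Baire : problem :=
  Problem (fun p => is_tree (in_tree p) /\ exists q, is_path (in_tree p) q)
          (fun p q => is_path (in_tree p) q).

Definition binary_string (s : list nat) : Prop := Forall (fun x => x <= 1) s.
Definition binary_seq (q : baire) : Prop := forall n, q n <= 1.

Definition in_btree (p : baire) (s : list nat) : Prop :=
  binary_string s /\ p (code s) = 0.

Definition C_Cantor : problem :=
  Problem (fun p => is_tree (in_btree p) /\
                    exists q, binary_seq q /\ is_path (in_btree p) q)
          (fun p q => binary_seq q /\ is_path (in_btree p) q).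

Definition incr_string (s : list nat) : Prop :=
  forall i, S i < length s -> nth i s 0 < nth (S i) s 0.

(* elements of the Ramsey space [N]^N *)
Definition ramsey (f : baire) : Prop := forall n, f n < f (S n).

Definition enumerated (p : baire) (s : list nat) : Prop :=
  exists n, p n = S (code s).

Definition open_name (p : baire) : Prop :=
  forall s, enumerated p s -> incr_string s.

Definition in_open (p : baire) (f : baire) : Prop :=
  ramsey f /\ exists s, enumerated p s /\ prefix f (length s) = s.

Definition homogeneous (p : baire) (f : baire) : Prop :=
  ramsey f /\
  ((forall g, ramsey g -> in_open p (fun n => f (g n))) \/
   (forall g, ramsey g -> ~ in_open p (fun n => f (g n)))).

Definition wFindHS_Pi01 : problem :=
  Problem (fun p => open_name p /\ forall f, homogeneous p f -> ~ in_open p f)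
          (fun p f => homogeneous p f /\ ~ in_open p f).

(* Nash-Williams' theorem, proved by Galvin-Prikry combinatorial forcing, makes every instance
   of wFindHS solvable, and its solutions form a Pi^0_1 class uniformly in the name: an increasing
   [f] is a solution iff no enumerated string of the open set is contained in the range of [f],
   because every increasing string in that range is a prefix of some [f o g]. Hence wFindHS reduces
   to closed choice on Baire space, and so does every [f * g] with [f <=W C_Cantor] and
   [g <=W wFindHS]: a single tree guesses the wFindHS solution [h] together with the binary
   solution [x] of the [f]-instance computed from [h], both requirements being Pi^0_1.
   Conversely, C_Baire factors as wFindHS followed by C_Cantor. For a tree [T] with a path, take
   the open set of increasing strings [s] such that no [t] in [T] of length [|s| - 1] fits into
   the gaps of [s] ([t_i < s_(i+1) - s_i]). Spreading out any [f] along the path shows that no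
   homogeneous set is inside it, and a solution [h] has arbitrarily long members of [T] in its
   gaps, so by König's lemma [T] has a path bounded by the gaps of [h]. Bounded paths form a
   closed subset of Cantor space once [x_i] is written in unary in the block [[h_i, h_(i+1))]. *)

From Stdlib Require Import List Arith Lia Bool.
From Stdlib Require Import ClassicalEpsilon FunctionalExtensionality Classical.
Import ListNotations.

(** * Recursive functions of several arguments *)

Definition recursive (n : nat) (F : list nat -> nat) : Prop :=
  exists e, forall v, length v = n -> reval e v (F v).

Definition recursive1 (f : nat -> nat) := recursive 1 (fun v => f (nth 0 v 0)).
Definition recursive2 (f : nat -> nat -> nat) :=
  recursive 2 (fun v => f (nth 0 v 0) (nth 1 v 0)).
Definition recursive3 (f : nat -> nat -> nat -> nat) :=
  recursive 3 (fun v => f (nth 0 v 0) (nth 1 v 0) (nth 2 v 0)).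

Lemma recursive_ext n F G :
  (forall v, length v = n -> G v = F v) -> recursive n G -> recursive n F.
Proof. intros H [e He]. exists e. intros v Hv. rewrite <- H by exact Hv. auto. Qed.

Lemma recursive_proj n i : i < n -> recursive n (fun v => nth i v 0).
Proof. intros Hi. exists (RProj i). intros v Hv. constructor. lia. Qed.

Lemma recursive_comp1 n f X : recursive1 f -> recursive n X -> recursive n (fun v => f (X v)).
Proof.
  intros [ef Hf] [ex Hx]. exists (RComp ef [ex]). intros v Hv.
  econstructor; [repeat econstructor; auto |]. apply (Hf [X v]). reflexivity.
Qed.

Lemma recursive_comp2 n f X Y :
  recursive2 f -> recursive n X -> recursive n Y -> recursive n (fun v => f (X v) (Y v)).
Proof.
  intros [ef Hf] [ex Hx] [ey Hy]. exists (RComp ef [ex; ey]). intros v Hv.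
  econstructor; [repeat econstructor; auto |]. apply (Hf [X v; Y v]). reflexivity.
Qed.

Lemma recursive_comp3 n f X Y Z :
  recursive3 f -> recursive n X -> recursive n Y -> recursive n Z ->
  recursive n (fun v => f (X v) (Y v) (Z v)).
Proof.
  intros [ef Hf] [ex Hx] [ey Hy] [ez Hz]. exists (RComp ef [ex; ey; ez]). intros v Hv.
  econstructor; [repeat econstructor; auto |]. apply (Hf [X v; Y v; Z v]). reflexivity.
Qed.

Lemma recursive1_S : recursive1 S.
Proof. exists RSucc. intros [|a [|b v]] Hv; try discriminate. constructor. Qed.

Lemma recursive_const n c : recursive n (fun _ => c).
Proof.
  induction c as [|c IH]; [exists RZero; constructor |].
  exact (recursive_comp1 n S _ recursive1_S IH).
Qed.

Fixpoint primrec (z0 : nat) (g : nat -> nat -> nat) (n : nat) : nat :=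
  match n with 0 => z0 | S n => g n (primrec z0 g n) end.

Lemma skipn_nth_cons (v l : list nat) j x :
  skipn j v = x :: l -> nth j v 0 = x /\ skipn (S j) v = l.
Proof.
  revert j. induction v; intros j H; [destruct j; discriminate |].
  destruct j; simpl in *; [inversion H; subst; auto | auto].
Qed.

Lemma revals_proj_seq v l j : skipn j v = l -> revals (map RProj (seq j (length l))) v l.
Proof.
  revert j. induction l as [|x l IH]; intros j H; [constructor |].
  destruct (skipn_nth_cons v l j x H) as [H1 H2].
  assert (Hj : j < length v).
  { destruct (Nat.lt_ge_cases j (length v)); auto. rewrite skipn_all2 in H by lia. discriminate. }
  constructor; [rewrite <- H1; constructor; auto | auto].
Qed.

Lemma recursive_primrec k A Z G :
  recursive k A -> recursive k Z ->
  recursive (S (S k)) (fun w => G (nth 0 w 0) (nth 1 w 0) (skipn 2 w)) ->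
  recursive k (fun v => primrec (Z v) (fun i z => G i z v) (A v)).
Proof.
  intros [ea Ha] [ez Hz] [eg Hg].
  exists (RComp (RPrim ez eg) (ea :: map RProj (seq 0 k))). intros v Hv.
  econstructor.
  - constructor; [auto | rewrite <- Hv; apply revals_proj_seq; reflexivity].
  - generalize (A v) as a. induction a; simpl; [constructor; auto |].
    econstructor; [exact IHa |].
    apply (Hg (a :: primrec (Z v) (fun i z => G i z v) a :: v)). simpl; lia.
Qed.

Lemma recursive_reindex m n F idx :
  recursive m F -> length idx = m -> Forall (fun i => i < n) idx ->
  recursive n (fun w => F (map (fun i => nth i w 0) idx)).
Proof.
  intros [ef Hf] Hl Hidx. exists (RComp ef (map RProj idx)). intros v Hv.
  apply ev_comp with (ws := map (fun i => nth i v 0) idx).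
  - clear Hl Hf. induction idx; simpl; [constructor |]. inversion Hidx; subst.
    constructor; [constructor; lia | auto].
  - apply Hf. rewrite length_map. auto.
Qed.

Lemma map_nth_seq_skipn (w : list nat) j :
  map (fun i => nth i w 0) (seq j (length w - j)) = skipn j w.
Proof.
  revert j. induction w as [|a w IH]; intros j; [destruct j; reflexivity |].
  destruct j.
  - cbn [length seq map skipn]. rewrite Nat.sub_0_r. cbn [seq map]. f_equal.
    rewrite <- seq_shift, map_map. specialize (IH 0). rewrite Nat.sub_0_r in IH. exact IH.
  - cbn [length skipn]. replace (S (length w) - S j) with (length w - j) by lia.
    rewrite <- seq_shift, map_map. apply IH.
Qed.

Lemma recursive_drop2 k N : recursive k N -> recursive (S (S k)) (fun w => N (skipn 2 w)).
Proof.
  intros H. eapply recursive_ext; [| apply (recursive_reindex k (S (S k)) N (seq 2 k) H)].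
  - intros v Hv. rewrite <- (map_nth_seq_skipn v 2). now replace (length v - 2) with k by lia.
  - apply length_seq.
  - apply Forall_forall. intros x Hx. apply in_seq in Hx. lia.
Qed.

Lemma recursive_drop_second k B :
  recursive (S k) (fun w => B (nth 0 w 0) (skipn 1 w)) ->
  recursive (S (S k)) (fun w => B (nth 0 w 0) (skipn 2 w)).
Proof.
  intros H. eapply recursive_ext; [| apply (recursive_reindex (S k) (S (S k)) _ (0 :: seq 2 k) H)].
  - intros v Hv. cbn [map]. f_equal. cbn [skipn].
    replace k with (length v - 2) at 1 by lia. now rewrite map_nth_seq_skipn.
  - simpl. rewrite length_seq. auto.
  - constructor; [lia |]. apply Forall_forall. intros x Hx. apply in_seq in Hx. lia.
Qed.

Lemma recursive_subst_head k F X :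
  recursive (S k) (fun w => F (nth 0 w 0) (skipn 1 w)) -> recursive (S (S k)) X ->
  recursive (S (S k)) (fun w => F (X w) (skipn 2 w)).
Proof.
  intros [ef Hf] [ex Hx]. exists (RComp ef (ex :: map RProj (seq 2 k))). intros v Hv.
  apply ev_comp with (ws := X v :: skipn 2 v).
  - constructor; [auto |].
    replace k with (length (skipn 2 v)) at 1 by (rewrite length_skipn; lia).
    apply revals_proj_seq. reflexivity.
  - apply (Hf (X v :: skipn 2 v)). cbn [length]. rewrite length_skipn. lia.
Qed.

Lemma recursive_nth_skipn n j m X :
  recursive n (fun w => nth (m + j) (X w) 0) -> recursive n (fun w => nth j (skipn m (X w)) 0).
Proof.
  apply recursive_ext. intros v _. generalize (X v). clear.
  induction m; intros l; [reflexivity |]. destruct l; simpl; [destruct j |]; auto.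
Qed.

Lemma recursive2_add : recursive2 Nat.add.
Proof.
  eapply recursive_ext;
    [| apply (recursive_primrec 2 (fun v => nth 0 v 0) (fun v => nth 1 v 0) (fun _ z _ => S z))].
  - intros v _. simpl. induction (nth 0 v 0); simpl; auto.
  - apply recursive_proj; lia.
  - apply recursive_proj; lia.
  - apply recursive_comp1; [apply recursive1_S | apply recursive_proj; lia].
Qed.

Lemma recursive2_mul : recursive2 Nat.mul.
Proof.
  eapply recursive_ext; [| apply (recursive_primrec 2 (fun v => nth 0 v 0) (fun _ => 0)
                                   (fun _ z v => z + nth 1 v 0))].
  - intros v _. simpl. induction (nth 0 v 0); simpl; lia.
  - apply recursive_proj; lia.
  - apply recursive_const.
  - apply recursive_comp2; [apply recursive2_add | apply recursive_proj; lia |].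
    apply (recursive_nth_skipn _ 1 2). apply recursive_proj. simpl; lia.
Qed.

Lemma recursive1_pred : recursive1 Nat.pred.
Proof.
  eapply recursive_ext;
    [| apply (recursive_primrec 1 (fun v => nth 0 v 0) (fun _ => 0) (fun i _ _ => i))].
  - intros v _. simpl. destruct (nth 0 v 0); reflexivity.
  - apply recursive_proj; lia.
  - apply recursive_const.
  - apply recursive_proj; lia.
Qed.

Lemma recursive2_sub : recursive2 Nat.sub.
Proof.
  eapply recursive_ext; [| apply (recursive_primrec 2 (fun v => nth 1 v 0) (fun v => nth 0 v 0)
                                   (fun _ z _ => Nat.pred z))].
  - intros v _. simpl. induction (nth 1 v 0) as [|n IH]; simpl; lia.
  - apply recursive_proj; lia.
  - apply recursive_proj; lia.
  - apply recursive_comp1; [apply recursive1_pred | apply recursive_proj; lia].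
Qed.

Definition b2n (b : bool) : nat := if b then 1 else 0.

Definition recursive_bool n (B : list nat -> bool) := recursive n (fun v => b2n (B v)).
Definition recursive_bool1 (f : nat -> bool) := recursive_bool 1 (fun v => f (nth 0 v 0)).
Definition recursive_bool2 (f : nat -> nat -> bool) :=
  recursive_bool 2 (fun v => f (nth 0 v 0) (nth 1 v 0)).

Lemma recursive_bool_comp1 n f X :
  recursive_bool1 f -> recursive n X -> recursive_bool n (fun v => f (X v)).
Proof. intros. apply (recursive_comp1 n (fun x => b2n (f x))); auto. Qed.

Lemma recursive_bool_comp2 n f X Y :
  recursive_bool2 f -> recursive n X -> recursive n Y -> recursive_bool n (fun v => f (X v) (Y v)).
Proof. intros. apply (recursive_comp2 n (fun x y => b2n (f x y))); auto. Qed.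

Lemma recursive_bool_const n b : recursive_bool n (fun _ => b).
Proof. apply (recursive_const n (b2n b)). Qed.

Lemma recursive_bool2_leb : recursive_bool2 Nat.leb.
Proof.
  eapply recursive_ext; [| apply (recursive_comp2 2 Nat.sub (fun _ => 1)
                                   (fun v => nth 0 v 0 - nth 1 v 0))].
  - intros v _. destruct (Nat.leb_spec (nth 0 v 0) (nth 1 v 0)); cbn [b2n]; lia.
  - apply recursive2_sub.
  - apply recursive_const.
  - apply recursive_comp2; [apply recursive2_sub | apply recursive_proj; lia ..].
Qed.

Lemma recursive_bool2_ltb : recursive_bool2 Nat.ltb.
Proof.
  apply (recursive_bool_comp2 2 Nat.leb (fun v => S (nth 0 v 0)));
    [apply recursive_bool2_leb | | apply recursive_proj; lia].
  apply recursive_comp1; [apply recursive1_S | apply recursive_proj; lia].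
Qed.

Lemma recursive_bool_andb n X Y :
  recursive_bool n X -> recursive_bool n Y -> recursive_bool n (fun v => X v && Y v).
Proof.
  intros HX HY.
  eapply recursive_ext; [| apply (recursive_comp2 n Nat.mul _ _ recursive2_mul HX HY)].
  intros v _; cbv beta. destruct (X v), (Y v); reflexivity.
Qed.

Lemma recursive_bool_negb n X : recursive_bool n X -> recursive_bool n (fun v => negb (X v)).
Proof.
  intros HX. eapply recursive_ext;
    [| apply (recursive_comp2 n Nat.sub _ _ recursive2_sub (recursive_const n 1) HX)].
  intros v _; cbv beta. destruct (X v); reflexivity.
Qed.

Lemma recursive_bool_orb n X Y :
  recursive_bool n X -> recursive_bool n Y -> recursive_bool n (fun v => X v || Y v).
Proof.
  intros HX HY. eapply recursive_ext; [| apply (recursive_bool_negb n _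
    (recursive_bool_andb n _ _ (recursive_bool_negb n _ HX) (recursive_bool_negb n _ HY)))].
  intros v _; cbv beta. destruct (X v), (Y v); reflexivity.
Qed.

Lemma recursive_bool2_eqb : recursive_bool2 Nat.eqb.
Proof.
  eapply recursive_ext; [| apply (recursive_bool_andb 2 (fun v => nth 0 v 0 <=? nth 1 v 0)
                                   (fun v => nth 1 v 0 <=? nth 0 v 0))].
  - intros v _; cbv beta. generalize (nth 0 v 0) (nth 1 v 0). intros a b.
    destruct (Nat.eqb_spec a b), (Nat.leb_spec a b), (Nat.leb_spec b a); simpl; auto; lia.
  - apply recursive_bool_comp2; [apply recursive_bool2_leb | apply recursive_proj; lia ..].
  - apply recursive_bool_comp2; [apply recursive_bool2_leb | apply recursive_proj; lia ..].
Qed.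

Definition ite (b : bool) (x y : nat) : nat := if b then x else y.

Lemma recursive_ite n B X Y :
  recursive_bool n B -> recursive n X -> recursive n Y ->
  recursive n (fun v => ite (B v) (X v) (Y v)).
Proof.
  intros HB HX HY. eapply recursive_ext; [| apply (recursive_comp2 n Nat.add _ _ recursive2_add
      (recursive_comp2 n Nat.mul _ _ recursive2_mul HB HX)
      (recursive_comp2 n Nat.mul _ _ recursive2_mul (recursive_bool_negb n _ HB) HY))].
  intros v _; cbv beta. unfold ite. destruct (B v); simpl; lia.
Qed.

Fixpoint exists_below (f : nat -> bool) (n : nat) : bool :=
  match n with 0 => false | S n => exists_below f n || f n end.
Fixpoint forall_below (f : nat -> bool) (n : nat) : bool :=
  match n with 0 => true | S n => forall_below f n && f n end.
Fixpoint min_below (f : nat -> bool) (n : nat) : nat :=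
  match n with
  | 0 => 0
  | S n' => let z := min_below f n' in if z <? n' then z else if f n' then n' else S n'
  end.
Fixpoint sum_below (f : nat -> nat) (n : nat) : nat :=
  match n with 0 => 0 | S n => sum_below f n + f n end.

Lemma recursive_exists_below k B N :
  recursive_bool (S k) (fun w => B (nth 0 w 0) (skipn 1 w)) -> recursive k N ->
  recursive_bool k (fun v => exists_below (fun i => B i v) (N v)).
Proof.
  intros HB HN. pose proof (recursive_drop_second k (fun a l => b2n (B a l)) HB) as HB2.
  eapply recursive_ext;
    [| apply (recursive_primrec k N (fun _ => 0) (fun i z v => b2n ((z =? 1) || B i v)))].
  - intros v _; cbv beta. induction (N v) as [|n IH]; simpl; auto.
    rewrite IH. destruct (exists_below _ n); reflexivity.
  - exact HN.
  - apply recursive_const.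
  - apply (recursive_bool_orb _ (fun w => nth 1 w 0 =? 1)); [| exact HB2].
    apply recursive_bool_comp2;
      [apply recursive_bool2_eqb | apply recursive_proj; lia | apply recursive_const].
Qed.

Lemma recursive_forall_below k B N :
  recursive_bool (S k) (fun w => B (nth 0 w 0) (skipn 1 w)) -> recursive k N ->
  recursive_bool k (fun v => forall_below (fun i => B i v) (N v)).
Proof.
  intros HB HN. eapply recursive_ext; [| apply (recursive_bool_negb k _
    (recursive_exists_below k (fun i v => negb (B i v)) N (recursive_bool_negb _ _ HB) HN))].
  intros v _; cbv beta. f_equal. induction (N v) as [|n IH]; simpl; auto.
  rewrite <- IH. destruct (exists_below _ n), (B n v); reflexivity.
Qed.

Lemma recursive_min_below k B N :
  recursive_bool (S k) (fun w => B (nth 0 w 0) (skipn 1 w)) -> recursive k N ->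
  recursive k (fun v => min_below (fun i => B i v) (N v)).
Proof.
  intros HB HN. pose proof (recursive_drop_second k (fun a l => b2n (B a l)) HB) as HB2.
  eapply recursive_ext; [| apply (recursive_primrec k N (fun _ => 0)
                                   (fun i z v => ite (z <? i) z (ite (B i v) i (S i))))].
  - intros v _; cbv beta. induction (N v) as [|n IH]; simpl; auto. rewrite IH. reflexivity.
  - exact HN.
  - apply recursive_const.
  - assert (H0 : recursive (S (S k)) (fun w => nth 0 w 0)) by (apply recursive_proj; lia).
    assert (H1 : recursive (S (S k)) (fun w => nth 1 w 0)) by (apply recursive_proj; lia).
    apply recursive_ite; [apply recursive_bool_comp2; auto; apply recursive_bool2_ltb | auto |].
    apply recursive_ite; auto. apply recursive_comp1; auto. apply recursive1_S.
Qed.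

Lemma recursive_sum_below k F N :
  recursive (S k) (fun w => F (nth 0 w 0) (skipn 1 w)) -> recursive k N ->
  recursive k (fun v => sum_below (fun i => F i v) (N v)).
Proof.
  intros HF HN. pose proof (recursive_drop_second k F HF) as HF2.
  eapply recursive_ext;
    [| apply (recursive_primrec k N (fun _ => 0) (fun i z v => z + F i v))].
  - intros v _; cbv beta. induction (N v) as [|n IH]; simpl; auto.
  - exact HN.
  - apply recursive_const.
  - apply recursive_comp2; [apply recursive2_add | apply recursive_proj; lia | exact HF2].
Qed.

Definition parity n := primrec 0 (fun _ z => 1 - z) n.
Definition half n := primrec 0 (fun i z => z + parity i) n.

Lemma half_parity n : 2 * half n + parity n = n /\ parity n <= 1.
Proof. induction n; [simpl; auto |]. unfold half, parity in *. cbn [primrec]. lia. Qed.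

Lemma half_div2 n : half n = Nat.div2 n.
Proof.
  rewrite Nat.div2_div. destruct (half_parity n) as [H1 H2].
  apply (Nat.div_unique n 2 (half n) (parity n)); lia.
Qed.

Lemma even_parity n : Nat.even n = (parity n =? 0).
Proof.
  destruct (half_parity n) as [H1 H2].
  replace (Nat.even n) with (Nat.even (parity n + 2 * half n)) by (f_equal; lia).
  rewrite Nat.even_add_mul_2. destruct (parity n) as [|[|]]; auto; lia.
Qed.

Lemma recursive1_parity : recursive1 parity.
Proof.
  apply (recursive_primrec 1 (fun v => nth 0 v 0) (fun _ => 0) (fun _ z _ => 1 - z));
    [apply recursive_proj; lia | apply recursive_const |].
  apply recursive_comp2; [apply recursive2_sub | apply recursive_const | apply recursive_proj; lia].
Qed.

Lemma recursive1_div2 : recursive1 Nat.div2.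
Proof.
  eapply recursive_ext; [| apply (recursive_primrec 1 (fun v => nth 0 v 0) (fun _ => 0)
                                   (fun i z _ => z + parity i))].
  - intros v _. apply half_div2.
  - apply recursive_proj; lia.
  - apply recursive_const.
  - apply recursive_comp2; [apply recursive2_add | apply recursive_proj; lia |].
    apply recursive_comp1; [apply recursive1_parity | apply recursive_proj; lia].
Qed.

Lemma recursive_bool1_even : recursive_bool1 Nat.even.
Proof.
  eapply recursive_ext;
    [| apply (recursive_bool_comp2 1 Nat.eqb (fun v => parity (nth 0 v 0)) (fun _ => 0))].
  - intros v _; cbv beta. rewrite even_parity. reflexivity.
  - apply recursive_bool2_eqb.
  - apply recursive_comp1; [apply recursive1_parity | apply recursive_proj; lia].
  - apply recursive_const.
Qed.

Lemma recursive2_cpair : recursive2 cpair.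
Proof.
  assert (Hs : recursive 2 (fun v => nth 0 v 0 + nth 1 v 0)).
  { apply recursive_comp2; [apply recursive2_add | apply recursive_proj; lia ..]. }
  eapply recursive_ext; [| apply (recursive_comp2 2 Nat.add
      (fun v => Nat.div2 ((nth 0 v 0 + nth 1 v 0) * (nth 0 v 0 + nth 1 v 0 + 1))))].
  - intros v _. unfold cpair. rewrite Nat.div2_div. reflexivity.
  - apply recursive2_add.
  - apply recursive_comp1; [apply recursive1_div2 |].
    apply recursive_comp2; [apply recursive2_mul | exact Hs |].
    apply recursive_comp2; [apply recursive2_add | exact Hs | apply recursive_const].
  - apply recursive_proj; lia.
Qed.

(* [code_last f n j] is the code of [f (n - j), ..., f (n - 1)]. *)
Fixpoint code_last (f : nat -> nat) (n j : nat) : nat :=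
  match j with 0 => 0 | S j' => S (cpair (f (n - S j')) (code_last f n j')) end.

Definition code_prefix (f : nat -> nat) n := code_last f n n.

Lemma recursive_code_last k F N J :
  recursive (S k) (fun w => F (nth 0 w 0) (skipn 1 w)) -> recursive k N -> recursive k J ->
  recursive k (fun v => code_last (fun i => F i v) (N v) (J v)).
Proof.
  intros HF HN HJ.
  eapply recursive_ext; [| apply (recursive_primrec k J (fun _ => 0)
                                   (fun i z v => S (cpair (F (N v - S i) v) z)))].
  - intros v _; cbv beta. induction (J v) as [|j IH]; simpl; auto.
  - exact HJ.
  - apply recursive_const.
  - apply recursive_comp1; [apply recursive1_S |].
    apply recursive_comp2; [apply recursive2_cpair | | apply recursive_proj; lia].
    apply (recursive_subst_head k F (fun w => N (skipn 2 w) - S (nth 0 w 0)) HF).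
    apply recursive_comp2; [apply recursive2_sub | apply recursive_drop2; auto |].
    apply recursive_comp1; [apply recursive1_S | apply recursive_proj; lia].
Qed.

Create HintDb recfun.
#[local] Hint Resolve recursive1_S recursive2_add recursive2_mul recursive1_pred recursive2_sub
  recursive_bool2_leb recursive_bool2_ltb recursive_bool2_eqb recursive1_div2
  recursive_bool1_even recursive2_cpair : recfun.

(* Proves [recursive n F] / [recursive_bool n B] by following the syntax of [F] / [B];
   the functions it meets must be registered in the [recfun] hint database. *)
Ltac solve_recursive :=
  cbv beta;
  match goal with
  | |- recursive _ (fun v => nth _ v 0) => apply recursive_proj; simpl; lia
  | |- recursive _ (fun v => nth ?j (skipn ?m (@?X v)) 0) =>
      apply (recursive_nth_skipn _ j m X); solve_recursive
  | |- recursive _ (fun v => ?c) => apply recursive_const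
  | |- recursive _ (fun v => primrec (@?Z v) (fun i z => @?G i z v) (@?A v)) =>
      apply (recursive_primrec _ A Z G); solve_recursive
  | |- recursive _ (fun v => ite (@?B v) (@?X v) (@?Y v)) =>
      apply (recursive_ite _ B X Y); [solve_recursive_bool | solve_recursive | solve_recursive]
  | |- recursive ?n (fun v => b2n (@?B v)) => change (recursive_bool n B); solve_recursive_bool
  | |- recursive _ (fun v => min_below (fun i => @?B i v) (@?N v)) =>
      apply (recursive_min_below _ B N); [solve_recursive_bool | solve_recursive]
  | |- recursive _ (fun v => sum_below (fun i => @?F i v) (@?N v)) =>
      apply (recursive_sum_below _ F N); solve_recursive
  | |- recursive _ (fun v => code_last (fun i => @?F i v) (@?N v) (@?J v)) =>
      apply (recursive_code_last _ F N J); solve_recursive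
  | |- recursive _ (fun v => ?f (@?X v) (@?Y v) (@?Z v)) =>
      apply (recursive_comp3 _ f X Y Z);
      [solve [eauto with recfun] | solve_recursive | solve_recursive | solve_recursive]
  | |- recursive _ (fun v => ?f (@?X v) (@?Y v)) =>
      apply (recursive_comp2 _ f X Y);
      [solve [eauto with recfun] | solve_recursive | solve_recursive]
  | |- recursive _ (fun v => ?f (@?X v)) =>
      apply (recursive_comp1 _ f X); [solve [eauto with recfun] | solve_recursive]
  end
with solve_recursive_bool :=
  cbv beta;
  match goal with
  | |- recursive_bool _ (fun v => ?c) => apply recursive_bool_const
  | |- recursive_bool _ (fun v => andb (@?X v) (@?Y v)) =>
      apply (recursive_bool_andb _ X Y); solve_recursive_bool
  | |- recursive_bool _ (fun v => orb (@?X v) (@?Y v)) =>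
      apply (recursive_bool_orb _ X Y); solve_recursive_bool
  | |- recursive_bool _ (fun v => negb (@?X v)) =>
      apply (recursive_bool_negb _ X); solve_recursive_bool
  | |- recursive_bool _ (fun v => exists_below (fun i => @?B i v) (@?N v)) =>
      apply (recursive_exists_below _ B N); [solve_recursive_bool | solve_recursive]
  | |- recursive_bool _ (fun v => forall_below (fun i => @?B i v) (@?N v)) =>
      apply (recursive_forall_below _ B N); [solve_recursive_bool | solve_recursive]
  | |- recursive_bool _ (fun v => ?f (@?X v) (@?Y v)) =>
      apply (recursive_bool_comp2 _ f X Y);
      [solve [eauto with recfun] | solve_recursive | solve_recursive]
  | |- recursive_bool _ (fun v => ?f (@?X v)) =>
      apply (recursive_bool_comp1 _ f X); [solve [eauto with recfun] | solve_recursive]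
  end.

Lemma exists_below_spec f n : exists_below f n = true <-> exists i, i < n /\ f i = true.
Proof.
  induction n; simpl; [split; [discriminate | intros [i [Hi _]]; lia] |].
  rewrite orb_true_iff, IHn. split.
  - intros [[i [Hi Hf]] | H]; [exists i; split; auto; lia | exists n; auto].
  - intros [i [Hi Hf]]. destruct (Nat.eq_dec i n); [subst; auto |].
    left; exists i; split; auto; lia.
Qed.

Lemma forall_below_spec f n : forall_below f n = true <-> forall i, i < n -> f i = true.
Proof.
  induction n; simpl; [split; auto; intros; lia |].
  rewrite andb_true_iff, IHn. split.
  - intros [H1 H2] i Hi. destruct (Nat.eq_dec i n); [subst; auto | apply H1; lia].
  - intros H. split; auto.
Qed.

Lemma min_below_spec f n :
  min_below f n <= n /\ (forall j, j < min_below f n -> f j = false) /\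
  (min_below f n < n -> f (min_below f n) = true).
Proof.
  induction n as [|n [H1 [H2 H3]]]; simpl; [split; auto; split; intros; lia |].
  destruct (Nat.ltb_spec (min_below f n) n); [split; [lia | auto] |].
  assert (E : min_below f n = n) by lia. rewrite E in *.
  destruct (f n) eqn:Hf; [split; [lia | auto] |].
  split; [lia | split; [| lia]].
  intros j Hj. destruct (Nat.eq_dec j n); [subst; auto | apply H2; lia].
Qed.

Lemma min_below_eq f n i :
  i < n -> f i = true -> (forall j, j < i -> f j = false) -> min_below f n = i.
Proof.
  intros Hi Hf Hj. destruct (min_below_spec f n) as [H1 [H2 H3]].
  destruct (Nat.lt_trichotomy (min_below f n) i) as [H | [H | H]]; auto.
  - rewrite Hj in H3 by auto. discriminate H3; lia.
  - rewrite H2 in Hf by auto. discriminate.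
Qed.

Lemma min_below_none f n : (forall j, j < n -> f j = false) -> min_below f n = n.
Proof.
  intros H. destruct (min_below_spec f n) as [H1 [H2 H3]].
  destruct (Nat.eq_dec (min_below f n) n); auto. rewrite H in H3 by lia. discriminate H3; lia.
Qed.

Lemma exists_below_ext f g n :
  (forall i, i < n -> f i = g i) -> exists_below f n = exists_below g n.
Proof. induction n; intros H; simpl; auto. rewrite IHn, H by auto. reflexivity. Qed.

Lemma forall_below_ext f g n :
  (forall i, i < n -> f i = g i) -> forall_below f n = forall_below g n.
Proof. induction n; intros H; simpl; auto. rewrite IHn, H by auto. reflexivity. Qed.

Lemma sum_below_ext f g n : (forall i, i < n -> f i = g i) -> sum_below f n = sum_below g n.
Proof. induction n; intros H; simpl; auto. rewrite IHn, H by auto. reflexivity. Qed.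

Definition tri s := s * (s + 1) / 2.

Lemma cpair_tri x y : cpair x y = tri (x + y) + y.
Proof. reflexivity. Qed.

Lemma tri_S s : tri (S s) = tri s + S s.
Proof.
  unfold tri. replace (S s * (S s + 1)) with (s * (s + 1) + S s * 2) by lia.
  rewrite Nat.div_add by lia. reflexivity.
Qed.

Lemma tri_mono s t : s <= t -> tri s <= tri t.
Proof. intros H. induction H; [lia | rewrite tri_S; lia]. Qed.

Lemma cpair_ge x y : x + y <= cpair x y.
Proof.
  rewrite cpair_tri.
  enough (x + y <= tri (x + y)) by lia.
  induction (x + y) as [|s IH]; [unfold tri; simpl; lia | rewrite tri_S; lia].
Qed.

Lemma cpair_inj x y x' y' : cpair x y = cpair x' y' -> x = x' /\ y = y'.
Proof.
  rewrite !cpair_tri. intros H.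
  assert (E : x + y = x' + y').
  { destruct (Nat.lt_trichotomy (x + y) (x' + y')) as [Hl | [Hl | Hl]]; auto.
    - pose proof (tri_mono (S (x + y)) (x' + y') Hl). rewrite tri_S in *. lia.
    - pose proof (tri_mono (S (x' + y')) (x + y) Hl). rewrite tri_S in *. lia. }
  rewrite E in H. split; lia.
Qed.

Lemma cpair_surj N : exists x y, cpair x y = N.
Proof.
  induction N as [|N [x [y H]]]; [exists 0, 0; reflexivity |].
  rewrite cpair_tri in H. destruct x.
  - exists (S y), 0. rewrite cpair_tri. replace (S y + 0) with (S y) by lia.
    rewrite tri_S. simpl in H. lia.
  - exists x, (S y). rewrite cpair_tri. replace (x + S y) with (S x + y) by lia. lia.
Qed.

Definition cpair_fst N := min_below (fun x => exists_below (fun y => cpair x y =? N) (S N)) (S N).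
Definition cpair_snd N := min_below (fun y => cpair (cpair_fst N) y =? N) (S N).

Lemma cpair_fst_cpair x y : cpair_fst (cpair x y) = x.
Proof.
  unfold cpair_fst. pose proof (cpair_ge x y). apply min_below_eq; [lia | |].
  - apply exists_below_spec. exists y. split; [lia | apply Nat.eqb_refl].
  - intros j Hj. destruct (exists_below _ _) eqn:He; auto. apply exists_below_spec in He.
    destruct He as [i [_ Hi]]. apply Nat.eqb_eq, cpair_inj in Hi. lia.
Qed.

Lemma cpair_snd_cpair x y : cpair_snd (cpair x y) = y.
Proof.
  unfold cpair_snd. rewrite cpair_fst_cpair. pose proof (cpair_ge x y).
  apply min_below_eq; [lia | apply Nat.eqb_refl |].
  intros j Hj. destruct (Nat.eqb_spec (cpair x j) (cpair x y)) as [E |]; auto.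
  apply cpair_inj in E. lia.
Qed.

Definition code_hd N := cpair_fst (N - 1).
Definition code_tl N := cpair_snd (N - 1).
Definition code_skipn i N := primrec N (fun _ z => code_tl z) i.
Definition code_nth i N := code_hd (code_skipn i N).
Definition code_length N := min_below (fun i => code_skipn i N =? 0) (S N).
Definition code_firstn j c := code_prefix (fun i => code_nth i c) j.

Lemma recursive1_cpair_fst : recursive1 cpair_fst.
Proof. unfold recursive1, cpair_fst. solve_recursive. Qed.
#[local] Hint Resolve recursive1_cpair_fst : recfun.
Lemma recursive1_cpair_snd : recursive1 cpair_snd.
Proof. unfold recursive1, cpair_snd. solve_recursive. Qed.
#[local] Hint Resolve recursive1_cpair_snd : recfun.
Lemma recursive1_code_tl : recursive1 code_tl.
Proof. unfold recursive1, code_tl. solve_recursive. Qed.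
#[local] Hint Resolve recursive1_code_tl : recfun.
Lemma recursive2_code_nth : recursive2 code_nth.
Proof. unfold recursive2, code_nth, code_hd, code_skipn. solve_recursive. Qed.
#[local] Hint Resolve recursive2_code_nth : recfun.
Lemma recursive1_code_length : recursive1 code_length.
Proof. unfold recursive1, code_length, code_skipn. solve_recursive. Qed.
#[local] Hint Resolve recursive1_code_length : recfun.
Lemma recursive2_code_firstn : recursive2 code_firstn.
Proof. unfold recursive2, code_firstn, code_prefix. solve_recursive. Qed.
#[local] Hint Resolve recursive2_code_firstn : recfun.

Lemma code_tl_code l : code_tl (code l) = code (List.tl l).
Proof.
  destruct l as [|x l]; [exact (cpair_snd_cpair 0 0) |].
  unfold code_tl. simpl. rewrite Nat.sub_0_r. apply cpair_snd_cpair.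
Qed.

Lemma code_skipn_code i l : code_skipn i (code l) = code (skipn i l).
Proof.
  induction i as [|i IH]; [reflexivity |]. unfold code_skipn in *. cbn [primrec].
  rewrite IH, code_tl_code. f_equal. clear IH. revert l. induction i; intros [|x l]; simpl; auto.
Qed.

Lemma code_nth_code i l : code_nth i (code l) = nth i l 0.
Proof.
  unfold code_nth, code_hd. rewrite code_skipn_code. revert l.
  induction i; intros [|x l]; simpl; try apply IHi; try exact (cpair_fst_cpair 0 0).
  rewrite Nat.sub_0_r. apply cpair_fst_cpair.
Qed.

Lemma code_length_le l : length l <= code l.
Proof. induction l as [|x l IH]; simpl; [lia |]. pose proof (cpair_ge x (code l)). lia. Qed.

Lemma code_length_code l : code_length (code l) = length l.
Proof.
  unfold code_length. pose proof (code_length_le l). apply min_below_eq; [lia | |].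
  - rewrite code_skipn_code, skipn_all. reflexivity.
  - intros j Hj. rewrite code_skipn_code. destruct (skipn j l) eqn:E; [| reflexivity].
    apply (f_equal (@length nat)) in E. rewrite length_skipn in E. simpl in E. lia.
Qed.

Lemma code_surj N : exists l, code l = N.
Proof.
  induction N as [N IH] using lt_wf_ind. destruct N as [|N]; [exists []; reflexivity |].
  destruct (cpair_surj N) as [x [c Hc]]. pose proof (cpair_ge x c).
  destruct (IH c ltac:(lia)) as [l Hl]. exists (x :: l). simpl. congruence.
Qed.

Lemma cpair_mono x y x' y' : x <= x' -> y <= y' -> cpair x y <= cpair x' y'.
Proof. intros. rewrite !cpair_tri. pose proof (tri_mono (x + y) (x' + y')). lia. Qed.

Lemma code_mono l l' :
  length l = length l' -> (forall i, nth i l 0 <= nth i l' 0) -> code l <= code l'.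
Proof.
  revert l'. induction l; intros l' Hl H; destruct l'; simpl in *; try lia.
  apply le_n_S, cpair_mono; [apply (H 0) | apply IHl; [lia | intros i; apply (H (S i))]].
Qed.

Lemma prefix_length p m : length (prefix p m) = m.
Proof. unfold prefix. rewrite length_map, length_seq. auto. Qed.

Lemma prefix_nth p m i : i < m -> nth i (prefix p m) 0 = p i.
Proof.
  intros H. unfold prefix.
  rewrite nth_indep with (d' := p 0) by (rewrite length_map, length_seq; auto).
  rewrite map_nth, seq_nth; auto.
Qed.

Lemma prefix_ext p q m : (forall i, i < m -> p i = q i) -> prefix p m = prefix q m.
Proof.
  intros H. unfold prefix. apply map_ext_in. intros a Ha. apply in_seq in Ha. apply H. lia.
Qed.

Lemma prefix_S p m : prefix p (S m) = prefix p m ++ [p m].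
Proof. unfold prefix. rewrite seq_S, map_app. reflexivity. Qed.

Lemma in_prefix p k y : In y (prefix p k) <-> exists j, j < k /\ p j = y.
Proof.
  unfold prefix. rewrite in_map_iff. split.
  - intros [j [E Hj]]. apply in_seq in Hj. exists j. split; auto. lia.
  - intros [j [Hj E]]. exists j. split; auto. apply in_seq. lia.
Qed.

Definition of_list (s : list nat) : baire := fun i => nth i s 0.

Lemma prefix_of_list s : prefix (of_list s) (length s) = s.
Proof.
  apply (nth_ext _ _ 0 0); rewrite prefix_length; auto.
  intros n Hn. rewrite prefix_nth by auto. reflexivity.
Qed.

Lemma prefix_of_list_app s t k :
  k <= length s -> prefix (of_list (s ++ t)) k = prefix (of_list s) k.
Proof.
  intros H. apply prefix_ext. intros i Hi. unfold of_list. rewrite app_nth1 by lia. reflexivity.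
Qed.

Lemma prefix_of_list_prefix z m k : k <= m -> prefix (of_list (prefix z m)) k = prefix z k.
Proof. intros H. apply prefix_ext. intros i Hi. unfold of_list. apply prefix_nth. lia. Qed.

Lemma code_prefixE f n : code_prefix f n = code (prefix f n).
Proof.
  enough (H : forall j, j <= n -> code_last f n j = code (map f (seq (n - j) j))).
  { unfold code_prefix. rewrite H, Nat.sub_diag; reflexivity. }
  induction j as [|j IH]; intros Hj; [reflexivity |]. simpl. rewrite IH by lia.
  replace (n - j) with (S (n - S j)) by lia. reflexivity.
Qed.

Lemma code_length_prefix p m : code_length (code (prefix p m)) = m.
Proof. rewrite code_length_code. apply prefix_length. Qed.

Lemma code_nth_prefix p m i : i < m -> code_nth i (code (prefix p m)) = p i.
Proof. intros. rewrite code_nth_code. apply prefix_nth; auto. Qed.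

Lemma code_firstn_prefix p m j : j <= m -> code_firstn j (code (prefix p m)) = code (prefix p j).
Proof.
  intros H. unfold code_firstn. rewrite code_prefixE. f_equal.
  apply prefix_ext. intros i Hi. apply code_nth_prefix. lia.
Qed.

Lemma code_firstn_code s k : k <= length s -> code_firstn k (code s) = code (prefix (of_list s) k).
Proof. intros H. rewrite <- (prefix_of_list s) at 1. apply code_firstn_prefix; auto. Qed.

(** * Associates of computable functionals *)

Lemma least_witness (P : nat -> Prop) :
  (exists m, P m) -> exists m, P m /\ forall m', m' < m -> ~ P m'.
Proof.
  intros [m Hm]. induction m as [m IH] using lt_wf_ind.
  destruct (classic (exists m', m' < m /\ P m')) as [[m' [H1 H2]] | H]; [eauto |].
  exists m. split; auto. intros m' Hm' HP. apply H. eauto.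
Qed.

Lemma assoc_intro h p q :
  (forall n m v, h (cpair n (code (prefix p m))) = S v -> v = q n) ->
  (forall n, exists m, h (cpair n (code (prefix p m))) <> 0) -> assoc h p q.
Proof.
  intros Hs Hc n. destruct (least_witness _ (Hc n)) as [m [H1 H2]]. exists m. split.
  - destruct (h (cpair n (code (prefix p m)))) eqn:E; [congruence |]. f_equal. exact (Hs _ _ _ E).
  - intros m' Hm'. specialize (H2 m' Hm'). lia.
Qed.

Lemma assoc_unique h p q1 q2 : assoc h p q1 -> assoc h p q2 -> forall n, q1 n = q2 n.
Proof.
  intros H1 H2 n. destruct (H1 n) as [m1 [A1 B1]], (H2 n) as [m2 [A2 B2]].
  destruct (Nat.lt_trichotomy m1 m2) as [H | [H | H]].
  - rewrite B2 in A1 by auto. discriminate.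
  - subst. rewrite A1 in A2. congruence.
  - rewrite B1 in A2 by auto. discriminate.
Qed.

Lemma assoc_ext h p p' q q' :
  assoc h p q -> (forall n, p n = p' n) -> (forall n, q n = q' n) -> assoc h p' q'.
Proof.
  intros H Hp Hq n. destruct (H n) as [m [A B]]. exists m.
  rewrite <- (prefix_ext p p' m), <- Hq by auto. split; auto.
  intros m' Hm'. rewrite <- (prefix_ext p p' m') by auto. auto.
Qed.

(* The value of output [k] of the functional with associate [h], as far as it is determined by
   the prefix coded by [c]: [S] of it if determined, [0] otherwise. *)
Definition assoc_eval (h : nat -> nat) (k c : nat) : nat :=
  let m := min_below (fun j => 0 <? h (cpair k (code_firstn j c))) (S (code_length c)) in
  ite (m <? S (code_length c)) (h (cpair k (code_firstn m c))) 0.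

Lemma recursive2_assoc_eval h : recursive1 h -> recursive2 (assoc_eval h).
Proof. intros Hh. unfold recursive2, assoc_eval. solve_recursive. Qed.
#[local] Hint Resolve recursive2_assoc_eval : recfun.

Lemma assoc_eval_prefix h p q k : assoc h p q -> exists m0, forall m,
  assoc_eval h k (code (prefix p m)) = if m0 <=? m then S (q k) else 0.
Proof.
  intros H. destruct (H k) as [m0 [A B]]. exists m0. intros m.
  unfold assoc_eval. rewrite code_length_prefix. destruct (Nat.leb_spec m0 m).
  - replace (min_below _ (S m)) with m0.
    + unfold ite. rewrite (proj2 (Nat.ltb_lt m0 (S m))), code_firstn_prefix by lia. auto.
    + symmetry. apply min_below_eq; [lia | rewrite code_firstn_prefix, A by lia; reflexivity |].
      intros j Hj. rewrite code_firstn_prefix, B by lia. reflexivity.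
  - rewrite min_below_none; [unfold ite; rewrite Nat.ltb_irrefl; reflexivity |].
    intros j Hj. rewrite code_firstn_prefix, B by lia. reflexivity.
Qed.

Lemma assoc_eval_sound h p q k m v :
  assoc h p q -> assoc_eval h k (code (prefix p m)) = S v -> v = q k.
Proof.
  intros H E. destruct (assoc_eval_prefix h p q k H) as [m0 Hm]. rewrite Hm in E.
  destruct (m0 <=? m); congruence.
Qed.

Lemma assoc_eval_eventually h p q k : assoc h p q ->
  exists M, forall m, M <= m -> assoc_eval h k (code (prefix p m)) = S (q k).
Proof.
  intros H. destruct (assoc_eval_prefix h p q k H) as [m0 Hm]. exists m0. intros m Hm'.
  rewrite Hm. destruct (Nat.leb_spec m0 m); auto; lia.
Qed.

Lemma eventually_forall_below (P : nat -> nat -> Prop) :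
  (forall k, exists M, forall m, M <= m -> P k m) ->
  forall K, exists M, forall m, M <= m -> forall k, k < K -> P k m.
Proof.
  intros H K. induction K as [|K [M1 H1]]; [exists 0; intros; lia |].
  destruct (H K) as [M2 H2]. exists (M1 + M2). intros m Hm k Hk.
  destruct (Nat.eq_dec k K); [subst; apply H2; lia | apply H1; lia].
Qed.

(* [D n c] is [S] of output [n] if the input prefix coded by [c] determines it, [0] otherwise. *)
Definition assoc_of (D : nat -> nat -> nat) (N : nat) : nat := D (cpair_fst N) (cpair_snd N).

Lemma recursive1_computable h : recursive1 h <-> computable h.
Proof.
  split; intros [e He]; exists e; [intros x; apply (He [x]); reflexivity |].
  intros [|x [|y v]] Hv; try discriminate. apply He.
Qed.

Lemma recursive1_assoc_of D : recursive2 D -> recursive1 (assoc_of D).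
Proof. intros H. unfold recursive1, assoc_of. solve_recursive. Qed.

Lemma computable_assoc_of D : recursive2 D -> computable (assoc_of D).
Proof. intros H. apply recursive1_computable, recursive1_assoc_of, H. Qed.

Lemma assoc_of_intro D p q :
  (forall n m v, D n (code (prefix p m)) = S v -> v = q n) ->
  (forall n, exists m, D n (code (prefix p m)) <> 0) -> assoc (assoc_of D) p q.
Proof.
  intros Hs Hc. apply assoc_intro; unfold assoc_of; intros n.
  - intros m v. rewrite cpair_fst_cpair, cpair_snd_cpair. apply Hs.
  - destruct (Hc n) as [m Hm]. exists m. rewrite cpair_fst_cpair, cpair_snd_cpair. auto.
Qed.

Definition id_step n c := ite (n <? code_length c) (S (code_nth n c)) 0.

Lemma recursive2_id_step : recursive2 id_step.
Proof. unfold recursive2, id_step. solve_recursive. Qed.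

Lemma assoc_id p : assoc (assoc_of id_step) p p.
Proof.
  apply assoc_of_intro; intros n; unfold id_step, ite.
  - intros m v. rewrite code_length_prefix. destruct (Nat.ltb_spec n m); [| discriminate].
    rewrite code_nth_prefix by auto. congruence.
  - exists (S n). rewrite code_length_prefix, (proj2 (Nat.ltb_lt n (S n))) by lia. discriminate.
Qed.

Lemma bpair_even p q n : bpair p q (2 * n) = p n.
Proof. unfold bpair. rewrite Nat.div2_double, Nat.even_mul. reflexivity. Qed.

Lemma bpair_odd p q n : bpair p q (S (2 * n)) = q n.
Proof. unfold bpair. rewrite Nat.div2_succ_double, Nat.even_succ, Nat.odd_mul. reflexivity. Qed.

Lemma even_or_odd n : exists k, n = 2 * k \/ n = S (2 * k).
Proof.
  exists (Nat.div2 n). pose proof (Nat.div2_odd n).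
  destruct (Nat.odd n); [right | left]; simpl in *; lia.
Qed.

Definition fst_step n c := ite (2 * n <? code_length c) (S (code_nth (2 * n) c)) 0.
Definition snd_step n c := ite (S (2 * n) <? code_length c) (S (code_nth (S (2 * n)) c)) 0.

Lemma recursive2_fst_step : recursive2 fst_step.
Proof. unfold recursive2, fst_step. solve_recursive. Qed.
Lemma recursive2_snd_step : recursive2 snd_step.
Proof. unfold recursive2, snd_step. solve_recursive. Qed.

Lemma assoc_fst p q : assoc (assoc_of fst_step) (bpair p q) p.
Proof.
  apply assoc_of_intro; intros n; unfold fst_step, ite.
  - intros m v. rewrite code_length_prefix. destruct (Nat.ltb_spec (2 * n) m); [| discriminate].
    rewrite code_nth_prefix, bpair_even by auto. congruence.
  - exists (S (2 * n)). rewrite code_length_prefix, (proj2 (Nat.ltb_lt _ _)) by lia. discriminate.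
Qed.

Lemma assoc_snd p q : assoc (assoc_of snd_step) (bpair p q) q.
Proof.
  apply assoc_of_intro; intros n; unfold snd_step, ite.
  - intros m v. rewrite code_length_prefix. destruct (Nat.ltb_spec (S (2 * n)) m); [| discriminate].
    rewrite code_nth_prefix, bpair_odd by auto. congruence.
  - exists (S (S (2 * n))).
    rewrite code_length_prefix, (proj2 (Nat.ltb_lt _ _)) by lia. discriminate.
Qed.

Definition pair_step hA hB n c :=
  ite (Nat.even n) (assoc_eval hA (Nat.div2 n) c) (assoc_eval hB (Nat.div2 n) c).

Lemma recursive2_pair_step hA hB : recursive1 hA -> recursive1 hB -> recursive2 (pair_step hA hB).
Proof. intros. unfold recursive2, pair_step. solve_recursive. Qed.

Lemma assoc_pair hA hB p q r :
  assoc hA p q -> assoc hB p r -> assoc (assoc_of (pair_step hA hB)) p (bpair q r).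
Proof.
  intros HA HB. apply assoc_of_intro; intros n; unfold pair_step, ite;
    destruct (even_or_odd n) as [k [-> | ->]];
    rewrite ?Nat.even_succ, ?Nat.odd_mul, ?Nat.even_mul, ?Nat.div2_succ_double, ?Nat.div2_double,
      ?bpair_even, ?bpair_odd; simpl.
  - intros m v E. eapply assoc_eval_sound; eauto.
  - intros m v E. eapply assoc_eval_sound; eauto.
  - destruct (assoc_eval_eventually hA p q k HA) as [M HM].
    exists M. rewrite HM by lia. discriminate.
  - destruct (assoc_eval_eventually hB p r k HB) as [M HM].
    exists M. rewrite HM by lia. discriminate.
Qed.

(* First decode the longest determined prefix of the intermediate output, then run [hB] on it. *)
Definition comp_step hA hB n c :=
  assoc_eval hB n (code_prefix (fun k => assoc_eval hA k c - 1)
                     (min_below (fun k => assoc_eval hA k c =? 0) (code_length c))).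

Lemma recursive2_comp_step hA hB : recursive1 hA -> recursive1 hB -> recursive2 (comp_step hA hB).
Proof. intros. unfold recursive2, comp_step, code_prefix. solve_recursive. Qed.

Lemma assoc_comp hA hB p q r :
  assoc hA p q -> assoc hB q r -> assoc (assoc_of (comp_step hA hB)) p r.
Proof.
  intros HA HB.
  set (undet m k := assoc_eval hA k (code (prefix p m)) =? 0).
  assert (Hpre : forall m, code_prefix (fun k => assoc_eval hA k (code (prefix p m)) - 1)
                             (min_below (undet m) (code_length (code (prefix p m))))
                           = code (prefix q (min_below (undet m) m))).
  { intros m. rewrite code_prefixE, code_length_prefix. f_equal. apply prefix_ext. intros i Hi.
    pose proof (proj1 (proj2 (min_below_spec (undet m) m)) i Hi) as Hu. unfold undet in Hu.
    destruct (assoc_eval hA i (code (prefix p m))) eqn:E; [discriminate |].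
    apply (assoc_eval_sound _ _ _ _ _ _ HA) in E. simpl. lia. }
  apply assoc_of_intro; intros n; unfold comp_step.
  - intros m v. rewrite Hpre. apply assoc_eval_sound, HB.
  - destruct (assoc_eval_eventually hB q r n HB) as [MB HMB].
    destruct (eventually_forall_below (fun k m => assoc_eval hA k (code (prefix p m)) = S (q k))
       (fun k => assoc_eval_eventually hA p q k HA) MB) as [M HM].
    exists (M + MB). rewrite Hpre, HMB; [discriminate |].
    pose proof (proj2 (proj2 (min_below_spec (undet (M + MB)) (M + MB)))) as Hd.
    set (k0 := min_below (undet (M + MB)) (M + MB)) in *.
    destruct (Nat.le_gt_cases MB k0) as [| Hgt]; auto.
    specialize (Hd ltac:(lia)). unfold undet in Hd. rewrite HM in Hd by lia. discriminate.
Qed.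

(** * Weihrauch reductions to closed choice *)

Lemma weihrauch_le_intro f g hP hS : computable hP -> computable hS ->
  (forall p, pdom f p -> exists q, assoc hP p q /\ pdom g q /\
     forall r, prel g q r -> exists s, assoc hS (bpair p r) s /\ prel f p s) ->
  weihrauch_le f g.
Proof.
  intros H1 H2 H. exists hP, hS. do 2 (split; auto).
  intros G HG p Hp. destruct (H p Hp) as [q [Hq [Hd Hr]]].
  exists q. split; auto. destruct (HG q Hd) as [r [Hr1 Hr2]]. eauto.
Qed.

(* Realizers need not be computable, so one may return any prescribed solution [r]. *)
Lemma weihrauch_le_elim f g : weihrauch_le f g -> (forall q, pdom g q -> exists r, prel g q r) ->
  exists hP hS, computable hP /\ computable hS /\
  (forall p, pdom f p -> exists q, assoc hP p q /\ pdom g q /\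
     forall r, prel g q r -> exists s, assoc hS (bpair p r) s /\ prel f p s).
Proof.
  intros [hP [hS [H1 [H2 H]]]] Hsol. exists hP, hS. do 2 (split; auto).
  set (G0 q := match excluded_middle_informative (pdom g q) with
               | left Hq => Some (proj1_sig (constructive_indefinite_description _ (Hsol q Hq)))
               | right _ => None end).
  assert (HG0 : realizer G0 g).
  { intros q Hq. unfold G0. destruct (excluded_middle_informative (pdom g q)); [| contradiction].
    destruct (constructive_indefinite_description _ _) as [r Hr]. simpl. eauto. }
  intros p Hp. destruct (H G0 HG0 p Hp) as [q [Hq [r0 [Er0 _]]]].
  assert (Hd : pdom g q).
  { unfold G0 in Er0. destruct (excluded_middle_informative (pdom g q)); auto. discriminate. }
  exists q. do 2 (split; auto). intros r Hr.
  set (G1 q' := match excluded_middle_informative (q' = q) with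
                | left _ => Some r | right _ => G0 q' end).
  assert (HG1 : realizer G1 g).
  { intros q' Hq'. unfold G1.
    destruct (excluded_middle_informative (q' = q)); [subst; eauto | auto]. }
  destruct (H G1 HG1 p Hp) as [q' [Hq' [r' [Er' [s [Hs1 Hs2]]]]]].
  assert (q' = q) by (apply functional_extensionality; intros n; eapply assoc_unique; eauto).
  subst q'. unfold G1 in Er'. destruct (excluded_middle_informative (q = q)); [| congruence].
  injection Er' as <-. eauto.
Qed.

Definition avoids (R : nat -> nat -> bool) (p z : baire) : Prop :=
  forall k, R (code (prefix p k)) (code (prefix z k)) = false.

Definition tree_step (R : nat -> nat -> bool) N c :=
  ite (code_length N <? code_length c)
      (S (b2n (exists_below (fun k => R (code_firstn k c) (code_firstn k N)) (S (code_length N)))))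
      0.

Lemma recursive2_tree_step R : recursive_bool2 R -> recursive2 (tree_step R).
Proof. intros HR. unfold recursive2, tree_step. solve_recursive. Qed.

Definition tree_of (R : nat -> nat -> bool) (p : baire) N :=
  b2n (exists_below (fun k => R (code (prefix p k)) (code_firstn k N)) (S (code_length N))).

Lemma assoc_tree_of R p : assoc (assoc_of (tree_step R)) p (tree_of R p).
Proof.
  apply assoc_of_intro; intros n; unfold tree_step, ite.
  - intros m v. rewrite code_length_prefix.
    destruct (Nat.ltb_spec (code_length n) m); [| discriminate].
    erewrite exists_below_ext; [intros E; injection E as <-; reflexivity |].
    intros i Hi. cbv beta. rewrite code_firstn_prefix by lia. reflexivity.
  - exists (S (code_length n)). rewrite code_length_prefix, (proj2 (Nat.ltb_lt _ _)) by lia.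
    discriminate.
Qed.

Lemma in_tree_tree_of R p s : in_tree (tree_of R p) s <->
  forall k, k <= length s -> R (code (prefix p k)) (code (prefix (of_list s) k)) = false.
Proof.
  unfold in_tree, tree_of. rewrite code_length_code. split.
  - intros H k Hk. destruct (exists_below _ _) eqn:E; [discriminate |].
    destruct (R _ _) eqn:E2; auto. rewrite <- E. symmetry. apply exists_below_spec.
    exists k. split; [lia | rewrite code_firstn_code; auto].
  - intros H. destruct (exists_below _ _) eqn:E; auto. apply exists_below_spec in E.
    destruct E as [k [Hk E]]. rewrite code_firstn_code, H in E by lia. discriminate.
Qed.

Lemma tree_of_is_tree R p : is_tree (in_tree (tree_of R p)).
Proof.
  intros s t. rewrite !in_tree_tree_of. intros H k Hk. rewrite <- (prefix_of_list_app s t k Hk).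
  apply H. rewrite length_app. lia.
Qed.

Lemma tree_of_path R p z : is_path (in_tree (tree_of R p)) z <-> avoids R p z.
Proof.
  unfold is_path, avoids. split.
  - intros H k. specialize (H k). rewrite in_tree_tree_of in H.
    rewrite <- (prefix_of_list_prefix z k k) by lia. apply H. rewrite prefix_length. lia.
  - intros H m. rewrite in_tree_tree_of. intros k Hk. rewrite prefix_length in Hk.
    rewrite prefix_of_list_prefix by auto. apply H.
Qed.

Lemma binary_prefix z m : binary_seq z -> binary_string (prefix z m).
Proof. intros H. apply Forall_map, Forall_forall. intros; apply H. Qed.

Lemma tree_of_binary_path R p z :
  binary_seq z -> is_path (in_btree (tree_of R p)) z <-> avoids R p z.
Proof.
  intros Hb. rewrite <- tree_of_path. unfold is_path, in_btree, in_tree. split.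
  - intros H m. apply H.
  - intros H m. split; [apply binary_prefix; auto | apply H].
Qed.

Lemma weihrauch_le_C_Baire_pi01 f R hS : recursive_bool2 R -> computable hS ->
  (forall p, pdom f p -> exists z, avoids R p z) ->
  (forall p z, pdom f p -> avoids R p z -> exists s, assoc hS (bpair p z) s /\ prel f p s) ->
  weihrauch_le f C_Baire.
Proof.
  intros HR HS H1 H2. apply (weihrauch_le_intro f C_Baire (assoc_of (tree_step R)) hS); auto.
  { apply computable_assoc_of, recursive2_tree_step; auto. }
  intros p Hp. exists (tree_of R p). split; [apply assoc_tree_of | split].
  - split; [apply tree_of_is_tree |]. destruct (H1 p Hp) as [z Hz].
    exists z. apply tree_of_path. auto.
  - intros r Hr. apply H2; auto. apply tree_of_path. auto.
Qed.

Lemma weihrauch_le_C_Cantor_pi01 f R hS : recursive_bool2 R -> computable hS ->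
  (forall p, pdom f p -> exists z, binary_seq z /\ avoids R p z) ->
  (forall p z, pdom f p -> binary_seq z -> avoids R p z ->
     exists s, assoc hS (bpair p z) s /\ prel f p s) ->
  weihrauch_le f C_Cantor.
Proof.
  intros HR HS H1 H2. apply (weihrauch_le_intro f C_Cantor (assoc_of (tree_step R)) hS); auto.
  { apply computable_assoc_of, recursive2_tree_step; auto. }
  intros p Hp. exists (tree_of R p). split; [apply assoc_tree_of | split].
  - split.
    + intros s t [Hb Ht].
      split; [apply Forall_app in Hb; tauto | apply (tree_of_is_tree R p s t Ht)].
    + destruct (H1 p Hp) as [z [Hbz Hz]]. exists z. split; auto. apply tree_of_binary_path; auto.
  - intros r [Hb Hr]. apply H2; auto. apply (tree_of_binary_path R p r Hb). auto.
Qed.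

(** * The Nash-Williams theorem *)

Lemma dependent_choice {X L : Type} (Inv : X -> Prop) (Rl : X -> L -> X -> Prop) (x0 : X) :
  Inv x0 -> (forall x, Inv x -> exists l y, Inv y /\ Rl x l y) ->
  exists (st : nat -> X) (lab : nat -> L),
    st 0 = x0 /\ forall n, Inv (st n) /\ Rl (st n) (lab n) (st (S n)).
Proof.
  intros H0 Hs.
  assert (Hs' : forall x, { ly : L * X | Inv x -> Inv (snd ly) /\ Rl x (fst ly) (snd ly) }).
  { intros x. apply constructive_indefinite_description.
    destruct (classic (Inv x)) as [Hx | Hx].
    - destruct (Hs x Hx) as [l [y Hy]]. exists (l, y). auto.
    - destruct (Hs x0 H0) as [l _]. exists (l, x). tauto. }
  set (F x := proj1_sig (Hs' x)). set (st n := Nat.iter n (fun x => snd (F x)) x0).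
  exists st, (fun n => fst (F (st n))). split; [reflexivity |]. intros n.
  assert (Hi : Inv (st n)) by (induction n; simpl; auto; apply (proj2_sig (Hs' _)); auto).
  split; auto. apply (proj2_sig (Hs' _)); auto.
Qed.

Lemma ramsey_lt f n m : ramsey f -> n < m -> f n < f m.
Proof. intros H Hnm. induction Hnm; [apply H | specialize (H m); lia]. Qed.

Lemma ramsey_le f n m : ramsey f -> n <= m -> f n <= f m.
Proof.
  intros H Hnm. destruct (Nat.eq_dec n m); [subst; auto | pose proof (ramsey_lt f n m H); lia].
Qed.

Lemma ramsey_ge_id f n : ramsey f -> n <= f n.
Proof. intros H. induction n; [lia | specialize (H n); lia]. Qed.

Lemma ramsey_lt_inv f n m : ramsey f -> f n < f m -> n < m.
Proof. intros H Hf. destruct (Nat.lt_ge_cases n m); auto. pose proof (ramsey_le f m n H). lia. Qed.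

Lemma ramsey_comp f g : ramsey f -> ramsey g -> ramsey (fun n => f (g n)).
Proof. intros Hf Hg n. apply ramsey_lt; auto. Qed.

Lemma ramsey_id : ramsey (fun n => n).
Proof. intros n; lia. Qed.

Definition subseq (B A : baire) := ramsey B /\ forall n, exists m, B n = A m.

Definition tail_after (A : baire) (i : nat) : baire := fun n => A (n + S i).

Lemma ramsey_tail_after A i : ramsey A -> ramsey (tail_after A i).
Proof. intros H n. apply H. Qed.

Lemma subseq_ramsey B A : subseq B A -> ramsey B.
Proof. intros [H _]; auto. Qed.

Lemma subseq_refl A : ramsey A -> subseq A A.
Proof. intros H. split; eauto. Qed.

Lemma subseq_trans C B A : subseq C B -> subseq B A -> subseq C A.
Proof.
  intros [H1 H2] [H3 H4]. split; auto. intros n.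
  destruct (H2 n) as [m Hm], (H4 m) as [k Hk]. exists k. congruence.
Qed.

Lemma subseq_tail_after A i : ramsey A -> subseq (tail_after A i) A.
Proof.
  intros H. split; [apply ramsey_tail_after; auto |]. intros n. exists (n + S i). reflexivity.
Qed.

Lemma subseq_index B A : ramsey A -> subseq B A -> exists g, ramsey g /\ forall n, B n = A (g n).
Proof.
  intros HA [HB Hs].
  set (g n := proj1_sig (constructive_indefinite_description _ (Hs n))).
  assert (Hg : forall n, B n = A (g n))
    by (intros n; apply (proj2_sig (constructive_indefinite_description _ (Hs n)))).
  exists g. split; auto. intros n. apply (ramsey_lt_inv A); auto. rewrite <- !Hg. apply HB.
Qed.

Lemma subseq_tail_after_tail_after B A i j :
  ramsey A -> subseq B A -> B i = A j -> subseq (tail_after B i) (tail_after A j).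
Proof.
  intros HA [HB Hs] Hij. split; [apply ramsey_tail_after; auto |]. intros n.
  destruct (Hs (n + S i)) as [m Hm].
  assert (j < m).
  { apply (ramsey_lt_inv A); auto. rewrite <- Hm, <- Hij. apply ramsey_lt; auto. lia. }
  exists (m - S j). unfold tail_after. rewrite Hm. f_equal. lia.
Qed.

Lemma subseq_tail_after_gt X D i : ramsey D -> subseq X (tail_after D i) -> forall m, D i < X m.
Proof.
  intros HD [_ H] m. destruct (H m) as [k Hk]. rewrite Hk. unfold tail_after.
  apply ramsey_lt; auto. lia.
Qed.

Lemma fusion (D : nat -> baire) (ix : nat -> nat) :
  ramsey (D 0) -> (forall n, subseq (D (S n)) (tail_after (D n) (ix n))) ->
  let b n := D n (ix n) in
  ramsey b /\ subseq b (D 0) /\ forall n, subseq (tail_after b n) (D (S n)).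
Proof.
  intros H0 HD b.
  assert (HR : forall n, ramsey (D n)) by (intros [|n]; [auto | apply (subseq_ramsey _ _ (HD n))]).
  assert (Hch : forall n k, subseq (D (n + k)) (D n)).
  { intros n k. induction k; [rewrite Nat.add_0_r; apply subseq_refl; auto |].
    rewrite Nat.add_succ_r. eapply subseq_trans; [apply HD |].
    eapply subseq_trans; [apply subseq_tail_after; auto | exact IHk]. }
  assert (Rb : ramsey b) by (intros n; apply (subseq_tail_after_gt (D (S n)) (D n) (ix n)); auto).
  split; [exact Rb | split].
  - split; auto. intros n. apply (Hch 0 n).
  - intros n. split; [apply ramsey_tail_after; auto |]. intros k.
    destruct (proj2 (Hch (S n) k) (ix (S n + k))) as [m Hm]. exists m.
    unfold tail_after, b. rewrite <- Hm, (Nat.add_comm k). reflexivity.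
Qed.

Section NashWilliams.

Variable P : list nat -> Prop.

Definition prepend (s : list nat) (h : baire) : baire :=
  fun n => if n <? length s then nth n s 0 else h (n - length s).

Definition accepts s (A : baire) :=
  forall g, ramsey g -> exists k, P (prefix (prepend s (fun n => A (g n))) k).
Definition rejects s (A : baire) := forall B, subseq B A -> ~ accepts s B.

Lemma accepts_of_mem s A : P s -> accepts s A.
Proof.
  intros Hs g _. exists (length s). rewrite <- (prefix_of_list s) in Hs at 1.
  erewrite prefix_ext; [exact Hs |]. intros i Hi. unfold prepend, of_list.
  rewrite (proj2 (Nat.ltb_lt i (length s)) Hi). reflexivity.
Qed.

Lemma accepts_subseq s A B : ramsey A -> accepts s A -> subseq B A -> accepts s B.
Proof.
  intros HA H HB g Hg. destruct (subseq_index B A HA HB) as [h [Hh E]].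
  destruct (H (fun n => h (g n)) (ramsey_comp h g Hh Hg)) as [k Hk]. exists k.
  erewrite prefix_ext; [exact Hk |]. intros i _. unfold prepend. destruct (i <? length s); auto.
Qed.

Lemma rejects_subseq s A B : rejects s A -> subseq B A -> rejects s B.
Proof. intros H HB C HC. apply H. eapply subseq_trans; eauto. Qed.

Lemma prepend_snoc s (h : baire) n :
  prepend s h n = prepend (s ++ [h 0]) (fun m => h (S m)) n.
Proof.
  unfold prepend. rewrite length_app. simpl.
  destruct (Nat.ltb_spec n (length s)), (Nat.ltb_spec n (length s + 1)); try lia.
  - rewrite app_nth1; auto.
  - replace n with (length s) by lia. rewrite nth_middle, Nat.sub_diag. reflexivity.
  - f_equal. lia.
Qed.

Lemma accepts_of_tails s b :
  ramsey b -> (forall n, accepts (s ++ [b n]) (tail_after b n)) -> accepts s b.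
Proof.
  intros Rb Hacc g Hg.
  set (g' n := g (S n) - S (g 0)).
  assert (Rg' : ramsey g').
  { intros n. unfold g'. pose proof (Hg (S n)). pose proof (ramsey_lt g 0 (S n) Hg). lia. }
  destruct (Hacc (g 0) g' Rg') as [k Hk]. exists k. erewrite prefix_ext; [exact Hk |].
  intros i _. rewrite (prepend_snoc s (fun n => b (g n)) i). unfold prepend.
  destruct (i <? length (s ++ [b (g 0)])); auto. unfold tail_after, g'.
  f_equal. pose proof (ramsey_lt g 0 (S (i - length (s ++ [b (g 0)]))) Hg). lia.
Qed.

Lemma rejects_extend s A : ramsey A -> rejects s A -> forall A', subseq A' A ->
  exists i B', subseq B' (tail_after A' i) /\ rejects (s ++ [A' i]) B'.
Proof.
  intros HA Hrej A' HA'. apply NNPP. intros Hn.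
  assert (Hall : forall i B', subseq B' (tail_after A' i) ->
                 exists B'', subseq B'' B' /\ accepts (s ++ [A' i]) B'').
  { intros i B' HB'. apply NNPP. intros Hno. apply Hn. exists i, B'. split; auto.
    intros C HC Hacc. apply Hno. eauto. }
  assert (RA' : ramsey A') by apply HA'.
  destruct (dependent_choice (fun D => subseq D A')
              (fun D i D' => subseq D' (tail_after D i) /\ accepts (s ++ [D i]) D') A')
    as [st [ix [H0 Hst]]]; [apply subseq_refl; auto | |].
  - intros D HD. destruct (proj2 HD 0) as [j Hj].
    assert (Ht : subseq (tail_after D 0) (tail_after A' j))
      by (apply subseq_tail_after_tail_after; auto).
    destruct (Hall j _ Ht) as [B'' [HB1 HB2]].
    exists 0, B''. split; [| split; [| rewrite Hj]]; auto.
    eapply subseq_trans; [exact HB1 |].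
    eapply subseq_trans; [apply subseq_tail_after, (subseq_ramsey _ _ HD) | exact HD].
  - destruct (fusion st ix) as [Rb [Sb Stl]]; [rewrite H0; auto | apply Hst |].
    apply (Hrej (fun n => st n (ix n))); [rewrite <- H0 in HA'; eapply subseq_trans; eauto |].
    apply accepts_of_tails; auto. intros n.
    apply (accepts_subseq _ (st (S n))); [apply (subseq_ramsey _ A'), Hst | apply Hst | apply Stl].
Qed.

Lemma rejects_diagonal s A : ramsey A -> rejects s A ->
  exists B, subseq B A /\ forall i, rejects (s ++ [B i]) (tail_after B i).
Proof.
  intros HA Hrej.
  destruct (dependent_choice (fun D => subseq D A)
              (fun D i D' => subseq D' (tail_after D i) /\ rejects (s ++ [D i]) D') A)
    as [st [ix [H0 Hst]]]; [apply subseq_refl; auto | |].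
  - intros D HD. destruct (rejects_extend s A HA Hrej D HD) as [i [D' [H1 H2]]].
    exists i, D'. split; auto. eapply subseq_trans; [exact H1 |].
    eapply subseq_trans; [apply subseq_tail_after, (subseq_ramsey _ _ HD) | exact HD].
  - destruct (fusion st ix) as [Rb [Sb Stl]]; [rewrite H0; auto | apply Hst |].
    exists (fun n => st n (ix n)). split; [rewrite <- H0; exact Sb |].
    intros n. apply rejects_subseq with (st (S n)); [apply Hst | apply Stl].
Qed.

Lemma rejects_diagonal_list Ls A : ramsey A -> (forall s, In s Ls -> rejects s A) ->
  exists B, subseq B A /\ forall s, In s Ls -> forall i, rejects (s ++ [B i]) (tail_after B i).
Proof.
  revert A. induction Ls as [|s Ls IH]; intros A HA H.
  - exists A. split; [apply subseq_refl; auto | intros s []].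
  - destruct (rejects_diagonal s A HA (H s (or_introl eq_refl))) as [B1 [HB1 HR1]].
    assert (RB1 : ramsey B1) by apply HB1.
    destruct (IH B1 RB1) as [B2 [HB2 HR2]].
    { intros s' Hs'. apply rejects_subseq with A; auto. apply H. right; auto. }
    exists B2. split; [eapply subseq_trans; eauto |].
    intros s' [<- | Hs'] i; auto.
    destruct (proj2 HB2 i) as [j Hj].
    apply rejects_subseq with (tail_after B1 j); [rewrite Hj; apply HR1 |].
    apply subseq_tail_after_tail_after; auto.
Qed.

Definition sublists (L : list nat) : list (list nat) :=
  fold_left (fun a x => a ++ map (fun s => s ++ [x]) a) L [[]].

Lemma sublists_snoc L x : sublists (L ++ [x]) = sublists L ++ map (fun s => s ++ [x]) (sublists L).
Proof. unfold sublists. rewrite fold_left_app. reflexivity. Qed.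

Lemma prefix_comp_in_sublists (c g : baire) :
  ramsey g -> forall k N, (forall j, j < k -> g j < N) ->
  In (prefix (fun n => c (g n)) k) (sublists (prefix c N)).
Proof.
  intros Hg.
  assert (Hmono : forall s N N', N <= N' -> In s (sublists (prefix c N)) ->
                  In s (sublists (prefix c N'))).
  { intros s N N' HN. induction HN; auto. intros H. rewrite prefix_S, sublists_snoc.
    apply in_or_app. auto. }
  induction k as [|k IH]; intros N HN; [apply (Hmono [] 0 N); [lia | simpl; auto] |].
  rewrite prefix_S. apply (Hmono _ (S (g k)) N); [apply HN; lia |].
  rewrite prefix_S, sublists_snoc. apply in_or_app. right. apply (in_map (fun s => s ++ [c (g k)])).
  apply IH. intros j Hj. apply ramsey_lt; auto.
Qed.

Definition rejecting (L : list nat) (A : baire) :=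
  ramsey A /\ (forall s, In s (sublists L) -> rejects s A) /\ (forall y, In y L -> y < A 0).

Lemma rejecting_step L A : rejecting L A -> exists z A', A 0 <= z /\ rejecting (L ++ [z]) A'.
Proof.
  intros [HA [HR HL]].
  destruct (rejects_diagonal_list (sublists L) A HA HR) as [B [HB HRB]].
  assert (RB : ramsey B) by apply HB.
  destruct (proj2 HB 0) as [m0 Hm0], (proj2 HB 1) as [m1 Hm1].
  exists (B 0), (tail_after B 0). split; [rewrite Hm0; apply ramsey_le; auto; lia |].
  split; [| split].
  - apply ramsey_tail_after; auto.
  - intros s. rewrite sublists_snoc. intros Hs. apply in_app_or in Hs. destruct Hs as [Hs | Hs].
    + apply rejects_subseq with A; auto.
      eapply subseq_trans; [apply subseq_tail_after; auto | auto].
    + apply in_map_iff in Hs. destruct Hs as [s' [<- Hs']]. auto.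
  - intros y Hy. apply in_app_or in Hy. unfold tail_after. simpl.
    destruct Hy as [Hy | [<- | []]]; [| apply RB].
    rewrite Hm1. pose proof (HL y Hy). pose proof (ramsey_le A 0 m1 HA). lia.
Qed.

Lemma rejecting_sequence : rejects [] (fun n => n) ->
  exists c, ramsey c /\ forall n, exists A, rejecting (prefix c n) A.
Proof.
  intros Hr0.
  destruct (dependent_choice (fun x => rejecting (fst x) (snd x))
              (fun x z y => fst y = fst x ++ [z] /\ snd x 0 <= z) ([], fun n => n))
    as [st [c [H0 Hst]]].
  - split; [apply ramsey_id | split; [intros s [<- | []]; auto | intros y []]].
  - intros [L A] HLA. destruct (rejecting_step L A HLA) as [z [A' [Hz HA']]].
    exists z, (L ++ [z], A'). auto.
  - assert (HLc : forall n, fst (st n) = prefix c n).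
    { induction n as [|n IH]; [rewrite H0; reflexivity |].
      rewrite (proj1 (proj2 (Hst n))), prefix_S, IH. reflexivity. }
    exists c. split.
    + intros n. destruct (proj1 (Hst (S n))) as [_ [_ HL]].
      pose proof (proj2 (proj2 (Hst (S n)))) as Hle.
      assert (Hin : In (c n) (fst (st (S n)))) by (rewrite HLc; apply in_prefix; eauto).
      specialize (HL _ Hin). lia.
    + intros n. exists (snd (st n)). rewrite <- HLc. apply Hst.
Qed.

Theorem nash_williams : exists f, ramsey f /\
  ((forall g, ramsey g -> exists k, P (prefix (fun n => f (g n)) k)) \/
   (forall g, ramsey g -> forall k, ~ P (prefix (fun n => f (g n)) k))).
Proof.
  destruct (classic (exists B, subseq B (fun n => n) /\ accepts [] B)) as [[B [HB Hacc]] | Hno].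
  - exists B. split; [apply HB |]. left. intros g Hg. destruct (Hacc g Hg) as [k Hk]. exists k.
    erewrite prefix_ext; [exact Hk |].
    intros i _. unfold prepend. simpl. rewrite Nat.sub_0_r. reflexivity.
  - destruct rejecting_sequence as [c [Hc Hrej]]; [intros B HB Ha; apply Hno; eauto |].
    exists c. split; auto. right. intros g Hg k Hk.
    destruct (Hrej (S (g k))) as [A [HA [HR _]]].
    apply (HR (prefix (fun n => c (g n)) k)) with A.
    + apply prefix_comp_in_sublists; auto. intros j Hj. pose proof (ramsey_lt g j k Hg Hj). lia.
    + apply subseq_refl; auto.
    + apply accepts_of_mem. auto.
Qed.

End NashWilliams.

(** * Solutions of wFindHS form a co-c.e. closed set *)

Lemma homogeneous_exists p : exists f, homogeneous p f.
Proof.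
  destruct (nash_williams (enumerated p)) as [f [Hf [H | H]]]; exists f; split; auto.
  - left. intros g Hg. destruct (H g Hg) as [k Hk]. split; [apply ramsey_comp; auto |].
    exists (prefix (fun n => f (g n)) k). rewrite prefix_length. auto.
  - right. intros g Hg [_ [s [Hs E]]]. apply (H g Hg (length s)). rewrite E. auto.
Qed.

Lemma wFindHS_solution_exists p : pdom wFindHS_Pi01 p -> exists f, prel wFindHS_Pi01 p f.
Proof. intros [_ Hd]. destruct (homogeneous_exists p) as [f Hf]. exists f. split; auto. Qed.

Lemma wFindHS_solution_spec p f : prel wFindHS_Pi01 p f <->
  ramsey f /\ forall g, ramsey g -> ~ in_open p (fun n => f (g n)).
Proof.
  split.
  - intros [[Hf [H | H]] Hn]; split; auto. exfalso. apply Hn, (H (fun n => n) ramsey_id).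
  - intros [Hf H]. split; [split; auto | apply (H (fun n => n) ramsey_id)].
Qed.

Lemma incr_string_prefix f k : ramsey f -> incr_string (prefix f k).
Proof. intros Hf i Hi. rewrite prefix_length in Hi. rewrite !prefix_nth by lia. apply Hf. Qed.

Lemma incr_string_in_range f s :
  ramsey f -> incr_string s -> (forall y, In y s -> exists j, f j = y) ->
  exists g, ramsey g /\ prefix (fun n => f (g n)) (length s) = s.
Proof.
  intros Hf Hs H.
  set (ix n := epsilon (inhabits 0) (fun j => f j = nth n s 0)).
  assert (Hix : forall n, n < length s -> f (ix n) = nth n s 0).
  { intros n Hn. apply (epsilon_spec (inhabits 0) (fun j => f j = nth n s 0)), H, nth_In; auto. }
  set (g n := if n <? length s then ix n else ix (length s - 1) + n).
  exists g. split.
  - intros n. unfold g.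
    destruct (Nat.ltb_spec n (length s)), (Nat.ltb_spec (S n) (length s)); try lia.
    + apply (ramsey_lt_inv f); auto. rewrite !Hix by auto. apply Hs. auto.
    + replace (length s - 1) with n by lia. lia.
  - apply (nth_ext _ _ 0 0); rewrite prefix_length; auto.
    intros n Hn. rewrite prefix_nth by auto. unfold g.
    rewrite (proj2 (Nat.ltb_lt _ _) Hn). apply Hix; auto.
Qed.

Definition code_incr c :=
  forall_below (fun i => code_nth i c <? code_nth (S i) c) (code_length c - 1).
Definition code_mem x c := exists_below (fun j => code_nth j c =? x) (code_length c).
Definition code_incl a c := forall_below (fun j => code_mem (code_nth j a) c) (code_length a).

Lemma code_incr_code l : code_incr (code l) = true <-> incr_string l.
Proof.
  unfold code_incr, incr_string. rewrite forall_below_spec, code_length_code. split.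
  - intros H i Hi. specialize (H i ltac:(lia)). rewrite !code_nth_code in H. apply Nat.ltb_lt; auto.
  - intros H i Hi. rewrite !code_nth_code. apply Nat.ltb_lt, H. lia.
Qed.

Lemma code_mem_code x l : code_mem x (code l) = true <-> In x l.
Proof.
  unfold code_mem. rewrite exists_below_spec, code_length_code. split.
  - intros [j [Hj E]]. rewrite code_nth_code in E. apply Nat.eqb_eq in E. subst. apply nth_In; auto.
  - intros H. destruct (In_nth l x 0 H) as [j [Hj E]]. exists j. split; auto.
    rewrite code_nth_code. apply Nat.eqb_eq; auto.
Qed.

Lemma code_incl_code a l : code_incl (code a) (code l) = true <-> incl a l.
Proof.
  unfold code_incl. rewrite forall_below_spec, code_length_code. split.
  - intros H y Hy. destruct (In_nth a y 0 Hy) as [j [Hj E]]. specialize (H j Hj).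
    rewrite code_nth_code, code_mem_code in H. congruence.
  - intros H j Hj. rewrite code_nth_code, code_mem_code. apply H, nth_In; auto.
Qed.

(* [ev i] is [S] of the code of the [i]-th enumerated string, or [0] when not (yet) known. *)
Definition hs_refuted (ev : nat -> nat) (K c : nat) : bool :=
  negb (code_incr c) || exists_below (fun i => (0 <? ev i) && code_incl (ev i - 1) c) K.

Lemma recursive_bool2_hs_refuted ev :
  recursive2 ev -> recursive_bool2 (fun c d => hs_refuted (ev c) (code_length c) d).
Proof.
  intros Hev. unfold recursive_bool2, hs_refuted, code_incr, code_incl, code_mem.
  solve_recursive_bool.
Qed.

Lemma solution_not_refuted a f ev K k : open_name a -> prel wFindHS_Pi01 a f ->
  (forall i, i < K -> ev i = 0 \/ ev i = a i) -> hs_refuted ev K (code (prefix f k)) = false.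
Proof.
  intros Ho Hsol Hev. apply wFindHS_solution_spec in Hsol. destruct Hsol as [Hf Hno].
  unfold hs_refuted. apply orb_false_iff. split.
  - apply negb_false_iff, code_incr_code, incr_string_prefix; auto.
  - destruct (exists_below _ _) eqn:E; auto. apply exists_below_spec in E.
    destruct E as [i [Hi E]]. apply andb_true_iff in E. destruct E as [E1 E2].
    apply Nat.ltb_lt in E1. destruct (Hev i Hi) as [E3 | E3]; [lia |]. rewrite E3 in *.
    destruct (code_surj (a i - 1)) as [s Hs]. rewrite <- Hs, code_incl_code in E2.
    assert (Hen : enumerated a s) by (exists i; lia).
    destruct (incr_string_in_range f s Hf (Ho s Hen)) as [g [Hg Eg]].
    { intros y Hy. apply E2, in_prefix in Hy. destruct Hy as [j [_ Hj]]. eauto. }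
    exfalso. apply (Hno g Hg). split; [apply ramsey_comp; auto |]. exists s. auto.
Qed.

Lemma unrefuted_solution a z (ev : nat -> nat -> nat) (K : nat -> nat) :
  (forall k, hs_refuted (ev k) (K k) (code (prefix z k)) = false) ->
  (forall i, exists k0, forall k, k0 <= k -> i < K k /\ ev k i = a i) ->
  prel wFindHS_Pi01 a z.
Proof.
  intros H Hev.
  assert (Hz : ramsey z).
  { intros n. specialize (H (S (S n))). apply orb_false_iff in H. destruct H as [H _].
    apply negb_false_iff, code_incr_code in H. specialize (H n).
    rewrite prefix_length, !prefix_nth in H by lia. apply H. lia. }
  apply wFindHS_solution_spec. split; auto. intros g Hg [_ [s [[i Hi] Es]]].
  destruct (Hev i) as [k0 Hk0]. set (k := k0 + S (g (length s))).
  destruct (Hk0 k ltac:(unfold k; lia)) as [HK Eev].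
  specialize (H k). apply orb_false_iff in H. destruct H as [_ H].
  apply not_true_iff_false in H. apply H, exists_below_spec. exists i. split; auto.
  rewrite Eev, Hi. simpl. rewrite Nat.sub_0_r. apply code_incl_code.
  intros y Hy. rewrite <- Es in Hy. apply in_prefix in Hy. destruct Hy as [j [Hj Ej]].
  apply in_prefix. exists (g j). split; auto. pose proof (ramsey_lt g j (length s) Hg Hj). lia.
Qed.

Theorem wFindHS_le_C_Baire : weihrauch_le wFindHS_Pi01 C_Baire.
Proof.
  apply (weihrauch_le_C_Baire_pi01 wFindHS_Pi01
           (fun c d => hs_refuted (fun i => code_nth i c) (code_length c) d) (assoc_of snd_step)).
  - apply (recursive_bool2_hs_refuted (fun c i => code_nth i c)).
    unfold recursive2. solve_recursive.
  - apply computable_assoc_of, recursive2_snd_step.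
  - intros p Hp. destruct (wFindHS_solution_exists p Hp) as [f Hf]. exists f. intros k.
    rewrite code_length_prefix. apply (solution_not_refuted p); auto; [apply Hp |].
    intros i Hi. right. apply code_nth_prefix; auto.
  - intros p z Hp Hk. exists z. split; [apply assoc_snd |].
    apply (unrefuted_solution p z (fun k i => code_nth i (code (prefix p k))) (fun k => k)).
    + intros k. specialize (Hk k). cbv beta in Hk. rewrite code_length_prefix in Hk. exact Hk.
    + intros i. exists (S i). intros k Hk2. split; [lia | apply code_nth_prefix; lia].
Qed.

(** * Compositional products of C_Cantor and wFindHS are below C_Baire *)

Definition evens (z : baire) : baire := fun n => z (2 * n).
Definition odds (z : baire) : baire := fun n => z (S (2 * n)).

Lemma bpair_evens_odds z n : bpair (evens z) (odds z) n = z n.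
Proof. destruct (even_or_odd n) as [k [-> | ->]]; rewrite ?bpair_even, ?bpair_odd; reflexivity. Qed.

Lemma prefix_bpair_evens_odds z k : prefix z k = prefix (bpair (evens z) (odds z)) k.
Proof. apply prefix_ext. intros. symmetry. apply bpair_evens_odds. Qed.

Definition code_evens c := code_prefix (fun i => code_nth (2 * i) c) (Nat.div2 (S (code_length c))).
Definition code_odds c := code_prefix (fun i => code_nth (S (2 * i)) c) (Nat.div2 (code_length c)).

Lemma recursive1_code_evens : recursive1 code_evens.
Proof. unfold recursive1, code_evens, code_prefix. solve_recursive. Qed.
#[local] Hint Resolve recursive1_code_evens : recfun.
Lemma recursive1_code_odds : recursive1 code_odds.
Proof. unfold recursive1, code_odds, code_prefix. solve_recursive. Qed.
#[local] Hint Resolve recursive1_code_odds : recfun.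

Lemma code_evens_bpair a b m :
  code_evens (code (prefix (bpair a b) m)) = code (prefix a (Nat.div2 (S m))).
Proof.
  unfold code_evens. rewrite code_length_prefix, code_prefixE. f_equal. apply prefix_ext.
  intros i Hi. rewrite code_nth_prefix, bpair_even; [reflexivity |].
  pose proof (Nat.div2_odd (S m)). destruct (Nat.odd (S m)); simpl in *; lia.
Qed.

Lemma code_odds_bpair a b m :
  code_odds (code (prefix (bpair a b) m)) = code (prefix b (Nat.div2 m)).
Proof.
  unfold code_odds. rewrite code_length_prefix, code_prefixE. f_equal. apply prefix_ext.
  intros i Hi. rewrite code_nth_prefix, bpair_odd; [reflexivity |].
  pose proof (Nat.div2_odd m). destruct (Nat.odd m); simpl in *; lia.
Qed.

(* A name of an instance [p] of [f1 * g1] is refuted as a pair [z = <h, x>] when [h] is refuted as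
   a wFindHS solution for the [g]-instance computed from [p] (by [hP1]), [x] is not binary, or
   [x] leaves the tree computed from [<p, h>] (by [hC]). *)
Definition comp_test (hP1 hC : nat -> nat) cp cz :=
  hs_refuted (fun i => assoc_eval hP1 i cp - 1) (code_length cp) (code_evens cz)
  || negb (forall_below (fun j => code_nth j (code_odds cz) <=? 1) (code_length (code_odds cz)))
  || exists_below (fun j => 1 <? assoc_eval hC (code_firstn j (code_odds cz))
        (code_prefix (fun i => ite (Nat.even i) (code_nth (Nat.div2 i) cp)
                                   (code_nth (Nat.div2 i) (code_evens cz)))
                     (2 * code_length (code_evens cz))))
     (S (code_length (code_odds cz))).

Lemma recursive_bool2_comp_test hP1 hC :
  recursive1 hP1 -> recursive1 hC -> recursive_bool2 (comp_test hP1 hC).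
Proof.
  intros. unfold recursive_bool2, comp_test, hs_refuted, code_incr, code_incl, code_mem.
  unfold code_prefix. solve_recursive_bool.
Qed.

Lemma comp_test_prefix hP1 hC p h x k :
  comp_test hP1 hC (code (prefix p k)) (code (prefix (bpair h x) k)) =
  hs_refuted (fun i => assoc_eval hP1 i (code (prefix p k)) - 1) k
             (code (prefix h (Nat.div2 (S k))))
  || negb (forall_below (fun j => x j <=? 1) (Nat.div2 k))
  || exists_below (fun j => 1 <? assoc_eval hC (code (prefix x j))
                                 (code (prefix (bpair p h) (2 * Nat.div2 (S k)))))
       (S (Nat.div2 k)).
Proof.
  unfold comp_test. rewrite code_evens_bpair, code_odds_bpair, !code_length_prefix.
  f_equal; [f_equal |].
  - f_equal. apply forall_below_ext. intros j Hj. rewrite code_nth_prefix; auto.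
  - apply exists_below_ext. intros j Hj. rewrite code_firstn_prefix, code_prefixE by lia.
    do 3 f_equal. apply prefix_ext. intros i Hi. unfold ite, bpair.
    assert (Nat.div2 (S k) <= k)
      by (pose proof (Nat.div2_odd (S k)); destruct (Nat.odd (S k)); simpl in *; lia).
    pose proof (Nat.div2_odd i). unfold Nat.odd in *.
    destruct (Nat.even i); simpl in *; rewrite code_nth_prefix; auto; lia.
Qed.

Section CompositionalProduct.

Variables (hP1 hC : nat -> nat) (p a : baire).
Hypotheses (Ha : assoc hP1 p a) (Hda : pdom wFindHS_Pi01 a).

Lemma comp_test_solution h c x : prel wFindHS_Pi01 a h -> assoc hC (bpair p h) c ->
  binary_seq x -> is_path (in_btree c) x -> avoids (comp_test hP1 hC) p (bpair h x).
Proof.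
  intros Hh Hc Hxb Hxp k. rewrite comp_test_prefix.
  apply orb_false_iff. split; [apply orb_false_iff; split |].
  - apply (solution_not_refuted a); [apply Hda | auto |]. intros i Hi.
    destruct (assoc_eval hP1 i (code (prefix p k))) eqn:E; [left; reflexivity |].
    right. simpl. rewrite Nat.sub_0_r. eapply assoc_eval_sound; eauto.
  - apply negb_false_iff, forall_below_spec. intros j _. apply Nat.leb_le, Hxb.
  - apply not_true_iff_false. intros E. apply exists_below_spec in E. destruct E as [j [_ E]].
    destruct (assoc_eval hC (code (prefix x j)) _) eqn:E2; [discriminate |].
    apply (assoc_eval_sound _ _ _ _ _ _ Hc) in E2. rewrite (proj2 (Hxp j)) in E2.
    subst. discriminate.
Qed.

Variable z : baire.
Hypothesis Hz : avoids (comp_test hP1 hC) p (bpair (evens z) (odds z)).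

Lemma comp_test_evens : prel wFindHS_Pi01 a (evens z).
Proof.
  apply (unrefuted_solution a (evens z) (fun k i => assoc_eval hP1 i (code (prefix p (2 * k))) - 1)
           (fun k => 2 * k)).
  - intros k. specialize (Hz (2 * k)). rewrite comp_test_prefix, Nat.div2_succ_double in Hz.
    apply orb_false_iff in Hz. destruct Hz as [Hz' _]. apply orb_false_iff in Hz'. apply Hz'.
  - intros i. destruct (assoc_eval_eventually hP1 p a i Ha) as [M HM]. exists (S i + M).
    intros k Hk. split; [lia |]. rewrite HM by lia. simpl. lia.
Qed.

Lemma comp_test_odds_binary : binary_seq (odds z).
Proof.
  intros n. specialize (Hz (2 * S n)). rewrite comp_test_prefix, Nat.div2_double in Hz.
  apply orb_false_iff in Hz. destruct Hz as [Hz' _]. apply orb_false_iff in Hz'.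
  destruct Hz' as [_ Hz']. apply negb_false_iff in Hz'. rewrite forall_below_spec in Hz'.
  apply Nat.leb_le, Hz'. lia.
Qed.

Lemma comp_test_odds c : assoc hC (bpair p (evens z)) c -> prel C_Cantor c (odds z).
Proof.
  intros Hc. split; [apply comp_test_odds_binary |].
  intros m. split; [apply binary_prefix, comp_test_odds_binary |].
  destruct (assoc_eval_eventually hC (bpair p (evens z)) c (code (prefix (odds z) m)) Hc) as [M HM].
  specialize (Hz (2 * (M + m + 1))).
  rewrite comp_test_prefix, Nat.div2_double, Nat.div2_succ_double in Hz.
  apply orb_false_iff in Hz. destruct Hz as [_ Hz']. apply not_true_iff_false in Hz'.
  destruct (c (code (prefix (odds z) m))) eqn:Ec; auto. exfalso. apply Hz', exists_below_spec.
  exists m. split; [lia |]. rewrite HM by lia. apply Nat.ltb_lt. lia.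
Qed.

End CompositionalProduct.

Definition assoc_fst_evens :=
  assoc_of (pair_step (assoc_of fst_step)
                      (assoc_of (comp_step (assoc_of snd_step) (assoc_of fst_step)))).
Definition assoc_odds_snd := assoc_of (comp_step (assoc_of snd_step) (assoc_of snd_step)).

Lemma recursive1_assoc_fst_evens : recursive1 assoc_fst_evens.
Proof.
  apply recursive1_assoc_of, recursive2_pair_step; apply recursive1_assoc_of;
    [apply recursive2_fst_step |].
  apply recursive2_comp_step; apply recursive1_assoc_of;
    [apply recursive2_snd_step | apply recursive2_fst_step].
Qed.

Lemma recursive1_assoc_odds_snd : recursive1 assoc_odds_snd.
Proof.
  apply recursive1_assoc_of, recursive2_comp_step; apply recursive1_assoc_of, recursive2_snd_step.
Qed.

Lemma assoc_fst_evens_spec p z : assoc assoc_fst_evens (bpair p z) (bpair p (evens z)).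
Proof.
  apply assoc_pair; [apply assoc_fst |]. apply assoc_comp with z; [apply assoc_snd |].
  apply (assoc_ext _ (bpair (evens z) (odds z)) z (evens z) (evens z));
    [apply assoc_fst | apply bpair_evens_odds | auto].
Qed.

Lemma assoc_odds_snd_spec p z : assoc assoc_odds_snd (bpair p z) (odds z).
Proof.
  apply assoc_comp with z; [apply assoc_snd |].
  apply (assoc_ext _ (bpair (evens z) (odds z)) z (odds z) (odds z));
    [apply assoc_snd | apply bpair_evens_odds | auto].
Qed.

(* On [<p, <h, x>>], run the backward reduction [hS1] of [g1] on [<p, h>], then [hS2] of [f1]. *)
Definition comp_output hS1 hS2 :=
  assoc_of (comp_step (assoc_of (pair_step (assoc_of (comp_step assoc_fst_evens hS1))
                                           assoc_odds_snd))
                      hS2).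

Lemma recursive1_comp_output hS1 hS2 :
  recursive1 hS1 -> recursive1 hS2 -> recursive1 (comp_output hS1 hS2).
Proof.
  intros. apply recursive1_assoc_of, recursive2_comp_step; auto.
  apply recursive1_assoc_of, recursive2_pair_step; [| apply recursive1_assoc_odds_snd].
  apply recursive1_assoc_of, recursive2_comp_step; auto. apply recursive1_assoc_fst_evens.
Qed.

Lemma assoc_comp_output hS1 hS2 p z b s : assoc hS1 (bpair p (evens z)) b ->
  assoc hS2 (bpair b (odds z)) s -> assoc (comp_output hS1 hS2) (bpair p z) s.
Proof.
  intros H1 H2. apply assoc_comp with (bpair b (odds z)); auto.
  apply assoc_pair; [| apply assoc_odds_snd_spec].
  apply assoc_comp with (bpair p (evens z)); auto. apply assoc_fst_evens_spec.
Qed.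

Theorem pcomp_le_C_Baire f1 g1 : weihrauch_le f1 C_Cantor -> weihrauch_le g1 wFindHS_Pi01 ->
  weihrauch_le (pcomp f1 g1) C_Baire.
Proof.
  intros Hf Hg.
  destruct (weihrauch_le_elim g1 wFindHS_Pi01 Hg wFindHS_solution_exists)
    as [hP1 [hS1 [CP1 [CS1 P1]]]].
  destruct (weihrauch_le_elim f1 C_Cantor Hf) as [hP2 [hS2 [CP2 [CS2 P2]]]].
  { intros q [_ [x [Hx1 Hx2]]]. exists x. split; auto. }
  apply recursive1_computable in CP1, CS1, CP2, CS2.
  set (hC := assoc_of (comp_step hS1 hP2)).
  assert (ChC : recursive1 hC) by (apply recursive1_assoc_of, recursive2_comp_step; auto).
  apply (weihrauch_le_C_Baire_pi01 (pcomp f1 g1) (comp_test hP1 hC) (comp_output hS1 hS2)).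
  - apply recursive_bool2_comp_test; auto.
  - apply recursive1_computable, recursive1_comp_output; auto.
  - intros p [Hp1 Hp2]. destruct (P1 p Hp1) as [a [Ha [Hda Hra]]].
    destruct (wFindHS_solution_exists a Hda) as [h Hh]. destruct (Hra h Hh) as [b [Hb Hbg]].
    destruct (P2 b (Hp2 b Hbg)) as [c [Hc [[_ [x [Hxb Hxp]]] _]]].
    exists (bpair h x). apply (comp_test_solution hP1 hC p a Ha Hda h c x); auto.
    apply assoc_comp with b; auto.
  - intros p z [Hp1 Hp2] Hz. destruct (P1 p Hp1) as [a [Ha [Hda Hra]]].
    assert (Hz' : avoids (comp_test hP1 hC) p (bpair (evens z) (odds z))).
    { intros k. rewrite <- prefix_bpair_evens_odds. apply Hz. }
    pose proof (comp_test_evens hP1 hC p a Ha z Hz') as Hh.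
    destruct (Hra _ Hh) as [b [Hb Hbg]]. destruct (P2 b (Hp2 b Hbg)) as [c [Hc [_ Hcs]]].
    destruct (Hcs (odds z)) as [s [Hs1 Hs2]].
    { apply (comp_test_odds hP1 hC p z Hz'). apply assoc_comp with b; auto. }
    exists s. split; [apply assoc_comp_output with b; auto | exists b; auto].
Qed.

(** * Closed choice on Baire space as a composition *)

Definition fits_gaps (sg s : list nat) : Prop :=
  length sg = length s - 1 /\ forall i, i < length sg -> nth i sg 0 + nth i s 0 < nth (S i) s 0.

Definition gap_test (pv : nat -> nat) (n : nat) : bool :=
  (0 <? code_length n) && code_incr n &&
  negb (exists_below (fun N => (code_length N =? code_length n - 1) &&
          forall_below (fun i => code_nth i N + code_nth i n <? code_nth (S i) n)
                       (code_length n - 1) &&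
          (pv N =? 0)) (S (code_tl n))).

(* The open set of nonempty increasing strings into whose gaps no string of the tree [p] fits;
   [code s] is enumerated at position [code s]. *)
Definition gap_name (p : baire) : baire := fun n => ite (gap_test p n) (S n) 0.

Definition gap_name_step n c :=
  ite (code_tl n <? code_length c) (S (ite (gap_test (fun N => code_nth N c) n) (S n) 0)) 0.

Lemma recursive2_gap_name_step : recursive2 gap_name_step.
Proof. unfold recursive2, gap_name_step, gap_test, code_incr. solve_recursive. Qed.

Lemma gap_test_ext pv pv' n :
  (forall N, N <= code_tl n -> pv N = pv' N) -> gap_test pv n = gap_test pv' n.
Proof.
  intros H. unfold gap_test. do 2 f_equal. apply exists_below_ext.
  intros i Hi. rewrite H by lia. reflexivity.
Qed.

Lemma assoc_gap_name p : assoc (assoc_of gap_name_step) p (gap_name p).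
Proof.
  apply assoc_of_intro; intros n; unfold gap_name_step, ite at 1.
  - intros m v. rewrite code_length_prefix. destruct (Nat.ltb_spec (code_tl n) m); [| discriminate].
    intros E. injection E as <-. unfold gap_name. f_equal. apply gap_test_ext.
    intros N HN. apply code_nth_prefix. lia.
  - exists (S (code_tl n)).
    rewrite code_length_prefix, (proj2 (Nat.ltb_lt _ _)) by lia. discriminate.
Qed.

Lemma gap_test_spec p s : gap_test p (code s) = true <->
  0 < length s /\ incr_string s /\ ~ exists sg, in_tree p sg /\ fits_gaps sg s.
Proof.
  unfold gap_test.
  rewrite !andb_true_iff, negb_true_iff, Nat.ltb_lt, code_length_code, code_incr_code.
  split.
  - intros [[H1 H2] H3]. do 2 (split; auto). intros [sg [E1 [E2 E3]]].
    apply not_true_iff_false in H3. apply H3, exists_below_spec. exists (code sg). split.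
    + rewrite code_tl_code. apply Nat.lt_succ_r, code_mono; [rewrite length_tl; lia |].
      intros i. destruct (Nat.lt_ge_cases i (length sg)).
      * pose proof (E3 i ltac:(lia)). destruct s; simpl in *; lia.
      * rewrite nth_overflow by lia. lia.
    + rewrite code_length_code, E2, Nat.eqb_refl, E1. simpl. rewrite andb_true_r.
      apply forall_below_spec. intros i Hi. rewrite !code_nth_code. apply Nat.ltb_lt, E3. lia.
  - intros [H1 [H2 H3]]. split; [split; auto |]. apply not_true_iff_false. intros E. apply H3.
    apply exists_below_spec in E. destruct E as [N [_ E]]. rewrite !andb_true_iff in E.
    destruct E as [[E1 E2] E3]. destruct (code_surj N) as [sg <-]. rewrite code_length_code in E1.
    apply Nat.eqb_eq in E1, E3. exists sg. do 2 (split; auto). rewrite forall_below_spec in E2.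
    intros i Hi. specialize (E2 i ltac:(lia)). rewrite !code_nth_code in E2. apply Nat.ltb_lt; auto.
Qed.

Lemma enumerated_gap_name p s : enumerated (gap_name p) s <-> gap_test p (code s) = true.
Proof.
  unfold enumerated, gap_name, ite. split.
  - intros [n Hn]. destruct (gap_test p n) eqn:E; [| discriminate]. injection Hn as ->. auto.
  - intros H. exists (code s). rewrite H. reflexivity.
Qed.

(* Indices spreading [f] so far apart that [x] fits into the gaps of [f] along them. *)
Fixpoint spread (f x : baire) (n : nat) : nat :=
  match n with 0 => 0 | S n => spread f x n + f (spread f x n) + x n + 1 end.

Lemma gap_name_dom p : (exists x, is_path (in_tree p) x) -> pdom wFindHS_Pi01 (gap_name p).
Proof.
  intros [x Hx]. split.
  - intros s Hs. apply enumerated_gap_name, gap_test_spec in Hs. apply Hs.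
  - intros f [Hf [H | H]]; [exfalso | apply (H (fun n => n) ramsey_id)].
    set (g := spread f x). assert (Hg : ramsey g) by (intros n; unfold g; simpl; lia).
    destruct (H g Hg) as [_ [s [Hs Es]]]. apply enumerated_gap_name, gap_test_spec in Hs.
    destruct Hs as [Hl [_ Hn]]. apply Hn. exists (prefix x (length s - 1)).
    split; [apply Hx |]. split; [apply prefix_length |]. intros i Hi. rewrite prefix_length in Hi.
    assert (Es' : forall j, j < length s -> nth j s 0 = f (g j))
      by (intros j Hj; rewrite <- Es at 1; rewrite prefix_nth; auto).
    rewrite prefix_nth, !Es' by lia. unfold g. simpl.
    pose proof (ramsey_ge_id f (spread f x i + f (spread f x i) + x i + 1) Hf). lia.
Qed.

Lemma gap_solution_fits p h : prel wFindHS_Pi01 (gap_name p) h ->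
  forall L, exists sg, in_tree p sg /\ length sg = L /\
                       forall i, i < L -> nth i sg 0 + h i < h (S i).
Proof.
  intros Hs L. apply wFindHS_solution_spec in Hs. destruct Hs as [Hh Hno]. apply NNPP. intros Hn.
  apply (Hno (fun n => n) ramsey_id). split; auto. exists (prefix h (S L)). split.
  - apply enumerated_gap_name, gap_test_spec. rewrite prefix_length.
    split; [lia | split; [apply incr_string_prefix; auto |]].
    intros [sg [E1 [E2 E3]]]. apply Hn. exists sg. rewrite prefix_length in E2.
    split; auto. split; [lia |]. intros i Hi. specialize (E3 i ltac:(lia)).
    rewrite !prefix_nth in E3 by lia. auto.
  - rewrite prefix_length. reflexivity.
Qed.

(** ** König's lemma for finitely branching trees *)

Section Konig.

Variables (T : list nat -> Prop) (b : nat -> nat).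
Hypothesis HT : is_tree T.

Definition bounded_by (sg : list nat) := forall i, i < length sg -> nth i sg 0 < b i.
Definition extension (u : list nat) L sg :=
  T sg /\ length sg = L /\ bounded_by sg /\ firstn (length u) sg = u.
Definition extendable u := forall L, length u <= L -> exists sg, extension u L sg.

Lemma extension_firstn u L L' sg :
  extension u L sg -> length u <= L' <= L -> extension u L' (firstn L' sg).
Proof.
  intros [E1 [E2 [E3 E4]]] HL'. split; [| split; [| split]].
  - apply (HT _ (skipn L' sg)). rewrite firstn_skipn. auto.
  - rewrite length_firstn. lia.
  - intros i Hi. rewrite length_firstn in Hi. rewrite nth_firstn.
    rewrite (proj2 (Nat.ltb_lt i L')) by lia. apply E3. lia.
  - rewrite firstn_firstn. now replace (Init.Nat.min (length u) L') with (length u) by lia.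
Qed.

Lemma firstn_S_snoc n (sg : list nat) :
  n < length sg -> firstn (S n) sg = firstn n sg ++ [nth n sg 0].
Proof.
  revert sg. induction n; intros [|x sg] H; simpl in *; try lia; [reflexivity |].
  f_equal. apply IHn. lia.
Qed.

Lemma extendable_step u : extendable u -> exists v, v < b (length u) /\ extendable (u ++ [v]).
Proof.
  intros He. apply NNPP. intros Hn.
  assert (Hdead : forall v, exists L, forall m, L <= m ->
            v < b (length u) -> ~ exists sg, extension (u ++ [v]) m sg).
  { intros v. destruct (classic (v < b (length u) /\ ~ extendable (u ++ [v]))) as [[Hv Hv'] | Hv].
    - apply not_all_ex_not in Hv'. destruct Hv' as [L HL]. apply imply_to_and in HL.
      destruct HL as [HL1 HL2]. exists L. intros m Hm _ [sg Hsg]. apply HL2.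
      exists (firstn L sg). apply (extension_firstn _ m); auto.
    - exists 0. intros m _ Hvb _. apply Hn. exists v. split; auto.
      apply NNPP. intros Hv'. apply Hv. auto. }
  destruct (eventually_forall_below (fun v m => v < b (length u) ->
              ~ exists sg, extension (u ++ [v]) m sg) Hdead (b (length u))) as [M HM].
  destruct (He (M + S (length u))) as [sg [E1 [E2 [E3 E4]]]]; [lia |].
  assert (Hv : nth (length u) sg 0 < b (length u)) by (apply E3; lia).
  apply (HM (M + S (length u)) ltac:(lia) _ Hv Hv). exists sg. split; [| split; [| split]]; auto.
  rewrite length_app. simpl. rewrite Nat.add_1_r, firstn_S_snoc, E4 by lia. reflexivity.
Qed.

Lemma konig_bounded : (forall L, exists sg, T sg /\ length sg = L /\ bounded_by sg) ->
  exists x, (forall m, T (prefix x m)) /\ forall i, x i < b i.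
Proof.
  intros H.
  destruct (dependent_choice extendable (fun u v u' => u' = u ++ [v] /\ v < b (length u)) [])
    as [st [x [H0 Hst]]].
  - intros L _. destruct (H L) as [sg [E1 [E2 E3]]]. exists sg. repeat split; auto.
  - intros u Hu. destruct (extendable_step u Hu) as [v [Hv1 Hv2]]. exists v, (u ++ [v]). auto.
  - assert (Hpre : forall n, st n = prefix x n).
    { induction n as [|n IH]; [rewrite H0; reflexivity |].
      rewrite (proj1 (proj2 (Hst n))), prefix_S, IH. reflexivity. }
    exists x. split.
    + intros m. assert (Hm : length (st m) <= m) by (rewrite Hpre, prefix_length; lia).
      destruct (proj1 (Hst m) m Hm) as [sg [E1 [E2 [_ E4]]]].
      rewrite Hpre, prefix_length, firstn_all2 in E4 by lia. rewrite <- E4. exact E1.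
    + intros i. pose proof (proj2 (proj2 (Hst i))). rewrite Hpre, prefix_length in H1. exact H1.
Qed.

End Konig.

Lemma gap_solution_bounded_path p h : is_tree (in_tree p) -> prel wFindHS_Pi01 (gap_name p) h ->
  exists x, is_path (in_tree p) x /\ forall i, x i + h i < h (S i).
Proof.
  intros HT Hs. pose proof (proj1 (proj1 (wFindHS_solution_spec _ _) Hs)) as Hh.
  destruct (konig_bounded (in_tree p) (fun i => h (S i) - h i) HT) as [x [Hx1 Hx2]].
  - intros L. destruct (gap_solution_fits p h Hs L) as [sg [E1 [E2 E3]]].
    exists sg. do 2 (split; auto). intros i Hi. specialize (E3 i ltac:(lia)). lia.
  - exists x. split; [exact Hx1 |]. intros i. specialize (Hx2 i). lia.
Qed.

Definition gap_problem : problem :=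
  Problem (pdom C_Baire)
          (fun p q => exists h, (forall n, q n = bpair p h n) /\ prel wFindHS_Pi01 (gap_name p) h).

Definition bounded_path_problem : problem :=
  Problem (fun q => is_tree (in_tree (evens q)) /\ ramsey (odds q) /\
                    exists x, is_path (in_tree (evens q)) x /\
                              forall i, x i + odds q i < odds q (S i))
          (fun q r => is_path (in_tree (evens q)) r).

Lemma in_tree_ext p p' s : (forall n, p n = p' n) -> in_tree p s <-> in_tree p' s.
Proof. intros H. unfold in_tree. rewrite H. tauto. Qed.

Lemma is_tree_ext p p' : (forall n, p n = p' n) -> is_tree (in_tree p) -> is_tree (in_tree p').
Proof. intros H HT s t. rewrite !(in_tree_ext p' p) by auto. apply HT. Qed.

Lemma is_path_ext p p' x :
  (forall n, p n = p' n) -> is_path (in_tree p) x -> is_path (in_tree p') x.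
Proof. intros H HP m. rewrite (in_tree_ext p' p) by auto. apply HP. Qed.

Lemma gap_problem_le_wFindHS : weihrauch_le gap_problem wFindHS_Pi01.
Proof.
  apply (weihrauch_le_intro gap_problem wFindHS_Pi01 (assoc_of gap_name_step) (assoc_of id_step));
    [apply computable_assoc_of, recursive2_gap_name_step |
     apply computable_assoc_of, recursive2_id_step |].
  intros p [HT Hx]. exists (gap_name p). split; [apply assoc_gap_name |].
  split; [apply gap_name_dom; auto |].
  intros r Hr. exists (bpair p r). split; [apply assoc_id | exists r; auto].
Qed.

Lemma gap_problem_solution_dom p q :
  pdom C_Baire p -> prel gap_problem p q -> pdom bounded_path_problem q.
Proof.
  intros [HT _] [h [Eq Hh]].
  assert (Ee : forall n, evens q n = p n) by (intros n; unfold evens; rewrite Eq; apply bpair_even).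
  assert (Eo : forall n, odds q n = h n) by (intros n; unfold odds; rewrite Eq; apply bpair_odd).
  split; [apply (is_tree_ext p); auto | split].
  - intros n. rewrite !Eo. apply (proj1 (wFindHS_solution_spec _ _) Hh).
  - destruct (gap_solution_bounded_path p h HT Hh) as [x [Hx1 Hx2]]. exists x.
    split; [apply (is_path_ext p); auto | intros i; rewrite !Eo; auto].
Qed.

Lemma C_Baire_le_pcomp : weihrauch_le C_Baire (pcomp bounded_path_problem gap_problem).
Proof.
  apply (weihrauch_le_intro _ _ (assoc_of id_step) (assoc_of snd_step));
    [apply computable_assoc_of, recursive2_id_step |
     apply computable_assoc_of, recursive2_snd_step |].
  intros p Hp. exists p. split; [apply assoc_id | split].
  - split; [exact Hp |]. intros q Hq. apply (gap_problem_solution_dom p); auto.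
  - intros r [q [[h [Eq Hh]] Hr]]. exists r. split; [apply assoc_snd |].
    apply (is_path_ext (evens q)); auto. intros n. unfold evens. rewrite Eq. apply bpair_even.
Qed.

Lemma pcomp_le_C_Baire_gap : weihrauch_le (pcomp bounded_path_problem gap_problem) C_Baire.
Proof.
  apply (weihrauch_le_intro _ _ (assoc_of id_step) (assoc_of snd_step));
    [apply computable_assoc_of, recursive2_id_step |
     apply computable_assoc_of, recursive2_snd_step |].
  intros p [Hp _]. exists p. split; [apply assoc_id | split; [exact Hp |]].
  intros r Hr. exists r. split; [apply assoc_snd |].
  destruct Hp as [HT Hx].
  destruct (wFindHS_solution_exists (gap_name p) (gap_name_dom p Hx)) as [h Hh].
  exists (bpair p h). split; [exists h; auto |].
  apply (is_path_ext p); auto. intros n. symmetry. apply bpair_even.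
Qed.

(* A path [x] bounded by the gaps of [h] is coded in unary: block [[h i, h (S i))] of the binary
   sequence starts with [x i] ones. *)
Definition block_sum (z : baire) a b := sum_below (fun j => ite ((a <=? j) && (j <? b)) (z j) 0) b.
Definition unary_decode (h z : baire) : baire := fun i => block_sum z (h i) (h (S i)).
Definition unary_encode (h x : baire) : baire :=
  fun j => b2n (exists_below (fun i => (h i <=? j) && (j <? h i + x i)) (S j)).

Lemma binary_unary_encode h x : binary_seq (unary_encode h x).
Proof. intros n. unfold unary_encode, b2n. destruct (exists_below _ _); lia. Qed.

Lemma unary_encode_block h x i j : ramsey h -> (forall i, x i + h i < h (S i)) ->
  h i <= j < h (S i) -> unary_encode h x j = b2n (j <? h i + x i).
Proof.
  intros Hh Hx Hj. unfold unary_encode. f_equal. destruct (Nat.ltb_spec j (h i + x i)).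
  - apply exists_below_spec. exists i. pose proof (ramsey_ge_id h i Hh).
    split; [lia |]. apply andb_true_iff. split; [apply Nat.leb_le | apply Nat.ltb_lt]; lia.
  - apply not_true_iff_false. intros E. apply exists_below_spec in E. destruct E as [i' [_ E]].
    apply andb_true_iff in E. destruct E as [E1 E2]. apply Nat.leb_le in E1. apply Nat.ltb_lt in E2.
    destruct (Nat.lt_trichotomy i' i) as [Hl | [Hl | Hl]]; [| subst; lia |].
    + pose proof (ramsey_le h (S i') i Hh Hl). pose proof (Hx i'). lia.
    + pose proof (ramsey_le h (S i) i' Hh Hl). lia.
Qed.

Lemma sum_below_indicator a c n :
  a <= c -> sum_below (fun j => b2n ((a <=? j) && (j <? c))) n = Nat.min n c - Nat.min n a.
Proof.
  intros Hac. induction n as [|n IH]; [reflexivity |]. cbn [sum_below]. rewrite IH.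
  destruct (Nat.leb_spec a n), (Nat.ltb_spec n c); cbn [b2n andb]; lia.
Qed.

Lemma unary_decode_encode h x i : ramsey h -> (forall i, x i + h i < h (S i)) ->
  unary_decode h (unary_encode h x) i = x i.
Proof.
  intros Hh Hx. unfold unary_decode, block_sum.
  rewrite (sum_below_ext _ (fun j => b2n ((h i <=? j) && (j <? h i + x i)))).
  - rewrite sum_below_indicator by lia. pose proof (Hx i). lia.
  - intros j Hj. unfold ite. destruct (Nat.leb_spec (h i) j); simpl; [| reflexivity].
    rewrite (proj2 (Nat.ltb_lt _ _) Hj). apply unary_encode_block; auto.
Qed.

Definition code_block_sum ch cz i :=
  sum_below (fun j => ite ((code_nth i ch <=? j) && (j <? code_nth (S i) ch)) (code_nth j cz) 0)
            (code_length cz).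
Definition code_unary_decode ch cz L := code_prefix (fun i => code_block_sum ch cz i) L.
(* The number of blocks that end within the first [K] positions, as far as [ch] tells. *)
Definition code_complete_blocks ch K :=
  min_below (fun i => negb ((S i <? code_length ch) && (code_nth (S i) ch <=? K))) (code_length ch).

Lemma recursive3_code_unary_decode : recursive3 code_unary_decode.
Proof. unfold recursive3, code_unary_decode, code_block_sum, code_prefix. solve_recursive. Qed.
#[local] Hint Resolve recursive3_code_unary_decode : recfun.
Lemma recursive2_code_complete_blocks : recursive2 code_complete_blocks.
Proof. unfold recursive2, code_complete_blocks. solve_recursive. Qed.
#[local] Hint Resolve recursive2_code_complete_blocks : recfun.

Lemma sum_below_trunc f b k :
  (forall j, b <= j -> f j = 0) -> b <= k -> sum_below f k = sum_below f b.
Proof. intros H Hk. induction Hk; auto. simpl. rewrite H by lia. lia. Qed.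

Lemma code_block_sum_prefix h z H k i : S i < H -> h (S i) <= k ->
  code_block_sum (code (prefix h H)) (code (prefix z k)) i = block_sum z (h i) (h (S i)).
Proof.
  intros H1 H2. unfold code_block_sum, block_sum.
  rewrite code_length_prefix, !code_nth_prefix by lia.
  rewrite (sum_below_ext _ (fun j => ite ((h i <=? j) && (j <? h (S i))) (z j) 0)).
  - apply sum_below_trunc; auto. intros j Hj. unfold ite.
    rewrite (proj2 (Nat.ltb_ge j (h (S i)))), andb_false_r by lia. reflexivity.
  - intros j Hj. rewrite code_nth_prefix; auto.
Qed.

Lemma code_complete_blocks_lt h H k i :
  i < code_complete_blocks (code (prefix h H)) k -> S i < H /\ h (S i) <= k.
Proof.
  unfold code_complete_blocks. rewrite code_length_prefix. intros Hi.
  destruct (min_below_spec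
              (fun i => negb ((S i <? H) && (code_nth (S i) (code (prefix h H)) <=? k))) H)
    as [_ [H2 _]].
  specialize (H2 i Hi). apply negb_false_iff, andb_true_iff in H2. destruct H2 as [A B].
  apply Nat.ltb_lt in A. apply Nat.leb_le in B. rewrite code_nth_prefix in B by auto. auto.
Qed.

Lemma code_complete_blocks_ge h H k L : L <= H -> (forall i, i < L -> S i < H /\ h (S i) <= k) ->
  L <= code_complete_blocks (code (prefix h H)) k.
Proof.
  intros HL Hi. unfold code_complete_blocks. rewrite code_length_prefix.
  set (f i := negb ((S i <? H) && (code_nth (S i) (code (prefix h H)) <=? k))).
  destruct (min_below_spec f H) as [_ [_ H3]]. set (m := min_below f H) in *.
  destruct (Nat.le_gt_cases L m) as [| Hlt]; auto.
  exfalso. specialize (H3 ltac:(lia)). destruct (Hi _ Hlt) as [A B]. unfold f in H3.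
  rewrite code_nth_prefix, (proj2 (Nat.ltb_lt _ _) A), (proj2 (Nat.leb_le _ _) B) in H3 by auto.
  discriminate.
Qed.

Lemma code_unary_decode_prefix h z H k L : L <= code_complete_blocks (code (prefix h H)) k ->
  code_unary_decode (code (prefix h H)) (code (prefix z k)) L = code (prefix (unary_decode h z) L).
Proof.
  intros HL. unfold code_unary_decode. rewrite code_prefixE. f_equal. apply prefix_ext. intros i Hi.
  destruct (code_complete_blocks_lt h H k i ltac:(lia)). apply code_block_sum_prefix; auto.
Qed.

(* Refute [z] once some decoded prefix of complete blocks is known to be outside the tree. *)
Definition bounded_path_test cq cz :=
  exists_below (fun L => (code_unary_decode (code_odds cq) cz L <? code_length (code_evens cq)) &&
                         (0 <? code_nth (code_unary_decode (code_odds cq) cz L) (code_evens cq)))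
               (S (code_complete_blocks (code_odds cq) (code_length cz))).

Lemma recursive_bool2_bounded_path_test : recursive_bool2 bounded_path_test.
Proof. unfold recursive_bool2, bounded_path_test. solve_recursive_bool. Qed.

Lemma bounded_path_test_prefix q z k :
  bounded_path_test (code (prefix q k)) (code (prefix z k)) =
  exists_below (fun L => (code (prefix (unary_decode (odds q) z) L) <? Nat.div2 (S k)) &&
                         (0 <? code_nth (code (prefix (unary_decode (odds q) z) L))
                                        (code (prefix (evens q) (Nat.div2 (S k))))))
               (S (code_complete_blocks (code (prefix (odds q) (Nat.div2 k))) k)).
Proof.
  unfold bounded_path_test.
  rewrite prefix_bpair_evens_odds, code_evens_bpair, code_odds_bpair, !code_length_prefix.
  apply exists_below_ext. intros L HL. rewrite code_unary_decode_prefix by lia. reflexivity.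
Qed.

Definition unary_decode_step n c :=
  let ch := code_odds (code_evens c) in
  ite ((S n <? code_length ch) && (code_nth (S n) ch <=? code_length (code_odds c)))
      (S (sum_below (fun j => ite ((code_nth n ch <=? j) && (j <? code_nth (S n) ch))
                                  (code_nth j (code_odds c)) 0)
                    (code_nth (S n) ch)))
      0.

Lemma recursive2_unary_decode_step : recursive2 unary_decode_step.
Proof. unfold recursive2, unary_decode_step. solve_recursive. Qed.

Lemma assoc_unary_decode q z :
  assoc (assoc_of unary_decode_step) (bpair q z) (unary_decode (odds q) z).
Proof.
  apply assoc_of_intro; intros n; unfold unary_decode_step.
  - intros m v. rewrite code_evens_bpair, code_odds_bpair, prefix_bpair_evens_odds, code_odds_bpair,
      !code_length_prefix.
    unfold ite. destruct (Nat.ltb_spec (S n) (Nat.div2 (Nat.div2 (S m)))); [| discriminate].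
    rewrite !code_nth_prefix by lia.
    destruct (Nat.leb_spec (odds q (S n)) (Nat.div2 m)); [| discriminate].
    simpl. intros E. injection E as <-. unfold unary_decode, block_sum. apply sum_below_ext.
    intros j Hj. rewrite code_nth_prefix by lia. reflexivity.
  - exists (2 * (2 * (odds q (S n) + n + 2))).
    rewrite code_evens_bpair, code_odds_bpair, prefix_bpair_evens_odds, code_odds_bpair,
      !code_length_prefix, Nat.div2_succ_double, !Nat.div2_double.
    rewrite (proj2 (Nat.ltb_lt _ _)), code_nth_prefix, (proj2 (Nat.leb_le _ _)) by lia.
    unfold ite. simpl. discriminate.
Qed.

Lemma unary_encode_avoids q x : ramsey (odds q) -> is_path (in_tree (evens q)) x ->
  (forall i, x i + odds q i < odds q (S i)) -> avoids bounded_path_test q (unary_encode (odds q) x).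
Proof.
  intros Hh Hx1 Hx2 k. rewrite bounded_path_test_prefix. apply not_true_iff_false. intros E.
  apply exists_below_spec in E. destruct E as [L [HL E]]. apply andb_true_iff in E.
  destruct E as [E1 E2]. apply Nat.ltb_lt in E1, E2. rewrite code_nth_prefix in E2 by auto.
  rewrite (prefix_ext _ x) in E2 by (intros i _; apply unary_decode_encode; auto).
  rewrite (Hx1 L) in E2. lia.
Qed.

Lemma avoids_unary_decode q z : ramsey (odds q) -> avoids bounded_path_test q z ->
  is_path (in_tree (evens q)) (unary_decode (odds q) z).
Proof.
  intros Hh HR L. set (x := unary_decode (odds q) z).
  set (K := odds q L + L + code (prefix x L) + 2).
  specialize (HR (2 * K)). cbv beta in HR.
  rewrite bounded_path_test_prefix, Nat.div2_succ_double, Nat.div2_double in HR.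
  unfold in_tree. destruct (evens q (code (prefix x L))) eqn:E; auto. exfalso.
  apply not_true_iff_false in HR. apply HR, exists_below_spec. exists L. split.
  - apply Nat.lt_succ_r, code_complete_blocks_ge; [unfold K; lia |].
    intros i Hi. split; [unfold K; lia |]. pose proof (ramsey_le _ (S i) L Hh Hi). unfold K. lia.
  - apply andb_true_iff. split; [apply Nat.ltb_lt; unfold K, x; lia |].
    rewrite code_nth_prefix by (unfold K, x; lia). unfold x in E. rewrite E. apply Nat.ltb_lt. lia.
Qed.

Lemma bounded_path_le_C_Cantor : weihrauch_le bounded_path_problem C_Cantor.
Proof.
  apply (weihrauch_le_C_Cantor_pi01 _ bounded_path_test (assoc_of unary_decode_step)).
  - apply recursive_bool2_bounded_path_test.
  - apply computable_assoc_of, recursive2_unary_decode_step.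
  - intros q [_ [Hh [x [Hx1 Hx2]]]]. exists (unary_encode (odds q) x).
    split; [apply binary_unary_encode | apply unary_encode_avoids; auto].
  - intros q z [_ [Hh _]] _ Hz. exists (unary_decode (odds q) z).
    split; [apply assoc_unary_decode | apply avoids_unary_decode; auto].
Qed.

Theorem mainTheorem5 :
  weihrauch_le wFindHS_Pi01 C_Baire /\
  equiv_cprod C_Baire C_Cantor wFindHS_Pi01.
Proof.
  split; [exact wFindHS_le_C_Baire | split].
  - exists bounded_path_problem, gap_problem.
    split; [exact bounded_path_le_C_Cantor |].
    split; [exact gap_problem_le_wFindHS |].
    split; [exact C_Baire_le_pcomp | exact pcomp_le_C_Baire_gap].
  - intros f1 g1. apply pcomp_le_C_Baire.
Qed.
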